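(* Let $I,J\subset\mathbb{R}$ be open intervals, $M=I\times J$ with coordinates $(u,v)$, let $q,f:I\to\mathbb{R}$ be smooth functions of $u$ and $r,g:J\to\mathbb{R}$ smooth functions of $v$, with $f(u)g(v)(1+q(u)r(v))^2\neq0$ on $M$. Then: (i) there exist smooth $F_1:I\to\mathrm{SL}_2\mathbb{R}$, $F_2:J\to\mathrm{SL}_2\mathbb{R}$ with $F_1^{-1}dF_1=\begin{pmatrix}q&-q^2\\1&-q\end{pmatrix}f\,du$ and $F_2^{-1}dF_2=\begin{pmatrix}r&-r^2\\1&-r\end{pmatrix}g\,dv$, and for any such solution $\varphi=F_1F_2^t:M\to\mathbb{H}^3_1(-1)$ is a conformal timelike immersion of constant mean curvature $\pm1$ whose induced metric is conformal to $(1+qr)^2f g\,du\,dv$; (ii) there exist smooth $F_1:I\to\mathrm{SL}_2\mathbb{R}$, $F_2:J\to\mathrm{SL}_2\mathbb{R}$ with $F_1^{-1}dF_1=\begin{pmatrix}q&-q^2\\1&-q\end{pmatrix}f\,du$ and $(dF_2^{-1})F_2=\begin{pmatrix}r&1\\-r^2&-r\end{pmatrix}g\,dv$, and for any such solution $\psi=F_1F_2^{-1}:M\to\mathbb{H}^3_1(-1)$ is a conformal timelike immersion of constant mean curvature $\pm1$ whose induced metric is conformal to $(1+qr)^2fg\,du\,dv$.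
   Context: $\mathbb{E}^4_2$ is $\mathbb{R}^4$ with metric $-(dx_0)^2-(dx_1)^2+(dx_2)^2+(dx_3)^2$, identified with $M_2(\mathbb{R})$ via $(x_0,x_1,x_2,x_3)\mapsto \begin{pmatrix}x_0+x_3& x_1+x_2\\ -x_1+x_2 & x_0-x_3\end{pmatrix}$, so $\langle u,v\rangle=\tfrac12\{\operatorname{tr}(uv)-\operatorname{tr}u\operatorname{tr}v\}$ and $\mathbb{H}^3_1(-1)=\{\langle x,x\rangle=-1\}=\mathrm{SL}_2\mathbb{R}$. Conformal timelike with null coordinates $(u,v)$: $\langle\varphi_u,\varphi_u\rangle=\langle\varphi_v,\varphi_v\rangle=0\neq\langle\varphi_u,\varphi_v\rangle$. Mean curvature w.r.t. unit normal $N$: $H=2e^{-\omega}\langle\varphi_{uv},N\rangle$ where the metric is $e^\omega du\,dv$; ''constant mean curvature $\pm1$'' means $H\equiv1$ or $H\equiv-1$ for the chosen unit normal. The metric $(1+qr)^2fg\,du\,dv$ is the induced metric of the timelike minimal surface in Minkowski 3-space with Weierstrass data $(q,f)$, $(r,g)$. *)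

From Stdlib Require Import Reals.
From Coquelicot Require Import Coquelicot.
Open Scope R_scope.

Definition rbar_open_interval (a b : Rbar) (x : R) : Prop :=
  Rbar_lt a x /\ Rbar_lt x b.

Definition smooth1 (I : R -> Prop) (h : R -> R) : Prop :=
  forall (n : nat) (x : R), I x -> ex_derive_n h n x.

(** Iterated partial derivatives of a function of two variables;
    [true] = d/du, [false] = d/dv (applied from the head of the list
    outermost). *)
Fixpoint pd (ds : list bool) (h : R -> R -> R) : R -> R -> R :=
  match ds with
  | nil => h
  | cons true ds' => fun u v => Derive (fun s => pd ds' h s v) u
  | cons false ds' => fun u v => Derive (fun t => pd ds' h u t) v
  end.

Definition smooth2 (D : R -> R -> Prop) (h : R -> R -> R) : Prop :=
  forall (ds : list bool) (u v : R), D u v ->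
    ex_derive (fun s => pd ds h s v) u /\
    ex_derive (fun t => pd ds h u t) v /\
    continuity_2d_pt (pd ds h) u v.

Record Mat2 : Type := mkM { m11 : R ; m12 : R ; m21 : R ; m22 : R }.

Definition mmul (A B : Mat2) : Mat2 :=
  mkM (m11 A * m11 B + m12 A * m21 B) (m11 A * m12 B + m12 A * m22 B)
      (m21 A * m11 B + m22 A * m21 B) (m21 A * m12 B + m22 A * m22 B).
Definition mtr (A : Mat2) : Mat2 := mkM (m11 A) (m21 A) (m12 A) (m22 A).
Definition mdet (A : Mat2) : R := m11 A * m22 A - m12 A * m21 A.
Definition mscale (c : R) (A : Mat2) : Mat2 :=
  mkM (c * m11 A) (c * m12 A) (c * m21 A) (c * m22 A).
Definition madd (A B : Mat2) : Mat2 :=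
  mkM (m11 A + m11 B) (m12 A + m12 B) (m21 A + m21 B) (m22 A + m22 B).
Definition mzero : Mat2 := mkM 0 0 0 0.
Definition minv (A : Mat2) : Mat2 :=
  mscale (/ mdet A) (mkM (m22 A) (- m12 A) (- m21 A) (m11 A)).

Definition inSL2 (A : Mat2) : Prop := mdet A = 1.

Definition mderiv (F : R -> Mat2) (x : R) : Mat2 :=
  mkM (Derive (fun t => m11 (F t)) x) (Derive (fun t => m12 (F t)) x)
      (Derive (fun t => m21 (F t)) x) (Derive (fun t => m22 (F t)) x).

Definition msmooth1 (I : R -> Prop) (F : R -> Mat2) : Prop :=
  smooth1 I (fun t => m11 (F t)) /\ smooth1 I (fun t => m12 (F t)) /\
  smooth1 I (fun t => m21 (F t)) /\ smooth1 I (fun t => m22 (F t)).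

Definition msmooth2 (D : R -> R -> Prop) (F : R -> R -> Mat2) : Prop :=
  smooth2 D (fun u v => m11 (F u v)) /\ smooth2 D (fun u v => m12 (F u v)) /\
  smooth2 D (fun u v => m21 (F u v)) /\ smooth2 D (fun u v => m22 (F u v)).

Definition d_u (F : R -> R -> Mat2) : R -> R -> Mat2 :=
  fun u v => mderiv (fun s => F s v) u.
Definition d_v (F : R -> R -> Mat2) : R -> R -> Mat2 :=
  fun u v => mderiv (fun t => F u t) v.

Record E4 : Type := mkE { x0 : R ; x1 : R ; x2 : R ; x3 : R }.
Definition ip4 (a b : E4) : R :=
  - x0 a * x0 b - x1 a * x1 b + x2 a * x2 b + x3 a * x3 b.

(** The identification E^4_2 = M_2(R):
    (x0,x1,x2,x3) |-> [[x0+x3, x1+x2], [-x1+x2, x0-x3]];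
    [coords] is its inverse. *)
Definition toMat (x : E4) : Mat2 :=
  mkM (x0 x + x3 x) (x1 x + x2 x) (- x1 x + x2 x) (x0 x - x3 x).
Definition coords (A : Mat2) : E4 :=
  mkE ((m11 A + m22 A) / 2) ((m12 A - m21 A) / 2)
      ((m12 A + m21 A) / 2) ((m11 A - m22 A) / 2).

Definition ip (A B : Mat2) : R := ip4 (coords A) (coords B).

Definition inH31 (A : Mat2) : Prop := ip A A = -1.

Definition lin_indep2 (A B : Mat2) : Prop :=
  forall a b : R, madd (mscale a A) (mscale b B) = mzero -> a = 0 /\ b = 0.

(** [phi] is a conformal timelike immersion D -> H^3_1(-1) with null
    coordinates (u,v). *)
Definition conformal_timelike_immersion (D : R -> R -> Prop)
    (phi : R -> R -> Mat2) : Prop :=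
  msmooth2 D phi /\
  forall u v, D u v ->
    inH31 (phi u v) /\
    lin_indep2 (d_u phi u v) (d_v phi u v) /\
    ip (d_u phi u v) (d_u phi u v) = 0 /\
    ip (d_v phi u v) (d_v phi u v) = 0 /\
    ip (d_u phi u v) (d_v phi u v) <> 0.

(** Coefficient of the induced metric [metric_coef phi du dv] (= e^omega). *)
Definition metric_coef (phi : R -> R -> Mat2) (u v : R) : R :=
  2 * ip (d_u phi u v) (d_v phi u v).

(** Unit normal of the surface [phi] in H^3_1(-1): smooth, orthogonal to
    the position vector and to the tangent plane, of length 1 (the normal of
    a timelike surface in H^3_1 is spacelike). *)
Definition unit_normal (D : R -> R -> Prop) (phi N : R -> R -> Mat2) : Prop :=
  msmooth2 D N /\
  forall u v, D u v ->
    ip (N u v) (N u v) = 1 /\ ip (N u v) (phi u v) = 0 /\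
    ip (N u v) (d_u phi u v) = 0 /\ ip (N u v) (d_v phi u v) = 0.

Definition mean_curv (phi N : R -> R -> Mat2) (u v : R) : R :=
  2 * / metric_coef phi u v * ip (d_v (d_u phi) u v) (N u v).

Definition cmc_pm1 (D : R -> R -> Prop) (phi : R -> R -> Mat2) : Prop :=
  exists N, unit_normal D phi N /\
    ((forall u v, D u v -> mean_curv phi N u v = 1) \/
     (forall u v, D u v -> mean_curv phi N u v = -1)).

Definition metric_conformal_to (D : R -> R -> Prop) (phi : R -> R -> Mat2)
    (lam : R -> R -> R) : Prop :=
  exists mu : R -> R -> R, smooth2 D mu /\
    forall u v, D u v -> 0 < mu u v /\ metric_coef phi u v = mu u v * lam u v.

Definition Aq (q : R) : Mat2 := mkM q (- q ^ 2) 1 (- q).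
Definition Br (r : R) : Mat2 := mkM r 1 (- r ^ 2) (- r).

From Stdlib Require Import Reals Lra Lia Psatz Factorial Classical List.
From Coquelicot Require Import Coquelicot.
Open Scope R_scope.

(* Write G := F2^t in (i) and G := F2^-1 in (ii).  In both cases the frame equations say
   F1' = F1 (f Aq(q)) and G' = (g Br(r)) G, so the surface F1 G, its partial derivatives and
   its mixed derivative are all of the form F1 Z G with Z = 1, f Aq(q), g Br(r),
   f g Aq(q) Br(r).  Since det F1 = det G = 1, the map Z |-> F1 Z G is an isometry of
   E^4_2 = M_2(R), so every invariant is computed at the identity frame: Aq(q) and Br(r) are
   null with <Aq(q), Br(r)> = (1 + q r)^2 / 2, and the matrix [normal_model q r] is a unit
   normal there with <Aq(q) Br(r), N> = (1 + q r)^2 / 2, which gives H = 1.  The frames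
   themselves come from Picard iteration for the linear system F' = F C; tr C = 0 keeps
   det F = 1, and smoothness of the solution is bootstrapped from F' = F C. *)

Lemma rbar_open_interval_ball (a b : Rbar) (x : R) : rbar_open_interval a b x ->
  exists e : posreal, forall y, Rabs (y - x) < e -> rbar_open_interval a b y.
Proof.
  intros [Ha Hb].
  assert (Hl : exists e : posreal, forall y, Rabs (y - x) < e -> Rbar_lt a y).
  { destruct a as [a| |]; simpl in Ha |- *; [|contradiction|].
    - assert (He : 0 < x - a) by lra. exists (mkposreal _ He); simpl.
      intros y Hy. apply Rabs_def2 in Hy. lra.
    - exists (mkposreal 1 Rlt_0_1). auto. }
  assert (Hr : exists e : posreal, forall y, Rabs (y - x) < e -> Rbar_lt y b).
  { destruct b as [b| |]; simpl in Hb |- *; [| |contradiction].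
    - assert (He : 0 < b - x) by lra. exists (mkposreal _ He); simpl.
      intros y Hy. apply Rabs_def2 in Hy. lra.
    - exists (mkposreal 1 Rlt_0_1). auto. }
  destruct Hl as [e1 He1], Hr as [e2 He2].
  exists (mkposreal _ (Rmin_pos _ _ (cond_pos e1) (cond_pos e2))); simpl.
  intros y Hy. split.
  - apply He1. eapply Rlt_le_trans; [exact Hy|apply Rmin_l].
  - apply He2. eapply Rlt_le_trans; [exact Hy|apply Rmin_r].
Qed.

Lemma rbar_open_interval_locally (a b : Rbar) (x : R) :
  rbar_open_interval a b x -> locally x (rbar_open_interval a b).
Proof. intro Hx. destruct (rbar_open_interval_ball a b x Hx) as [e He]. exists e. exact He. Qed.

Lemma rbar_open_interval_convex (a b : Rbar) (x y z : R) :
  rbar_open_interval a b x -> rbar_open_interval a b y ->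
  Rmin x y <= z <= Rmax x y -> rbar_open_interval a b z.
Proof.
  intros [Hx1 Hx2] [Hy1 Hy2] Hz. unfold Rmin, Rmax in Hz.
  destruct (Rle_dec x y); split;
    solve [destruct a as [a| |]; simpl in *; auto; lra
          |destruct b as [b| |]; simpl in *; auto; lra].
Qed.

Lemma rbar_open_interval_segment (a b : Rbar) (al be : R) :
  rbar_open_interval a b al -> rbar_open_interval a b be ->
  forall s, al <= s <= be -> rbar_open_interval a b s.
Proof.
  intros Hal Hbe s Hs. apply (rbar_open_interval_convex a b al be s Hal Hbe).
  rewrite Rmin_left, Rmax_right by lra. exact Hs.
Qed.

Lemma rbar_open_interval_strict_bounds (a b : Rbar) (x : R) : rbar_open_interval a b x ->
  exists al be, rbar_open_interval a b al /\ rbar_open_interval a b be /\ al < x < be.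
Proof.
  intro Hx. destruct (rbar_open_interval_ball a b x Hx) as [e He]. pose proof (cond_pos e).
  exists (x - e / 2), (x + e / 2). split; [|split]; [apply He..|lra].
  - rewrite Rabs_left; lra.
  - rewrite Rabs_right; lra.
Qed.

Lemma continuity_pt_of_continuous (h : R -> R) (x : R) :
  continuous h x -> continuity_pt h x.
Proof. apply continuity_pt_filterlim. Qed.

Lemma continuous_of_ex_derive (h : R -> R) (x : R) : ex_derive h x -> continuous h x.
Proof. apply (@ex_derive_continuous R_AbsRing R_NormedModule). Qed.

(** * Smooth functions of one and two variables *)

Lemma Derive_n_Derive (h : R -> R) (k : nat) (x : R) :
  Derive_n (Derive h) k x = Derive_n h (S k) x.
Proof.
  revert x; induction k as [|k IH]; intro x; simpl; [reflexivity|].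
  apply Derive_ext. intro t. apply IH.
Qed.

Section Smooth1.
Variable I : R -> Prop.
Hypothesis I_open : forall x, I x -> locally x I.

Fixpoint ex_derive_upto (n : nat) (h : R -> R) : Prop :=
  match n with
  | O => True
  | S n => (forall t, I t -> ex_derive h t) /\ ex_derive_upto n (Derive h)
  end.

Lemma ex_derive_upto_S n h : ex_derive_upto (S n) h -> ex_derive_upto n h.
Proof.
  revert h; induction n as [|n IH]; intros h H; [exact Logic.I|].
  destruct H as [Hd Hn]. split; [exact Hd|apply IH, Hn].
Qed.

Lemma smooth1_upto h : smooth1 I h <-> forall n, ex_derive_upto n h.
Proof.
  split.
  - intros H n. revert h H. induction n as [|n IH]; intros h H; [exact Logic.I|]. split.
    + intros t Ht. exact (H 1%nat t Ht).
    + apply IH. intros k t Ht. specialize (H (S k) t Ht). destruct k; [exact Logic.I|].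
      simpl in H |- *. eapply ex_derive_ext; [|exact H].
      intro s. symmetry. apply Derive_n_Derive.
  - assert (G : forall n h, ex_derive_upto n h ->
               forall k t, (k <= n)%nat -> I t -> ex_derive_n h k t).
    { clear h. induction n as [|n IH]; intros h Hn [|k] t Hk Ht; try exact Logic.I; [lia|].
      destruct Hn as [Hd Hn]. destruct k as [|k]; [apply Hd, Ht|].
      specialize (IH _ Hn (S k) t ltac:(lia) Ht). simpl in IH |- *.
      eapply ex_derive_ext; [|exact IH]. intro s. apply Derive_n_Derive. }
    intros H k t Ht. exact (G k h (H k) k t (le_n _) Ht).
Qed.

Lemma ex_derive_upto_ext n h k : (forall t, I t -> h t = k t) ->
  ex_derive_upto n h -> ex_derive_upto n k.
Proof.
  revert h k; induction n as [|n IH]; intros h k E H; [exact Logic.I|].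
  destruct H as [Hd Hn]. split.
  - intros t Ht. eapply ex_derive_ext_loc; [|apply Hd, Ht].
    eapply filter_imp; [exact E|apply I_open, Ht].
  - eapply IH; [|exact Hn]. intros t Ht. apply Derive_ext_loc.
    eapply filter_imp; [exact E|apply I_open, Ht].
Qed.

Lemma ex_derive_upto_const n c : ex_derive_upto n (fun _ => c).
Proof.
  revert c; induction n as [|n IH]; intro c; [exact Logic.I|]. split.
  - intros; apply ex_derive_const.
  - eapply ex_derive_upto_ext; [|apply (IH 0)].
    intros t _. symmetry. apply Derive_const.
Qed.

Lemma ex_derive_upto_plus n h k : ex_derive_upto n h -> ex_derive_upto n k ->
  ex_derive_upto n (fun t => h t + k t).
Proof.
  revert h k; induction n as [|n IH]; intros h k Hh Hk; [exact Logic.I|].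
  destruct Hh as [Hh1 Hh2], Hk as [Hk1 Hk2]. split.
  - intros t Ht. apply (ex_derive_plus h k); auto.
  - eapply ex_derive_upto_ext; [|apply (IH _ _ Hh2 Hk2)].
    intros t Ht. symmetry. apply Derive_plus; auto.
Qed.

Lemma ex_derive_upto_mult n h k : ex_derive_upto n h -> ex_derive_upto n k ->
  ex_derive_upto n (fun t => h t * k t).
Proof.
  revert h k; induction n as [|n IH]; intros h k Hh Hk; [exact Logic.I|].
  pose proof (ex_derive_upto_S _ _ Hh) as Hh'. pose proof (ex_derive_upto_S _ _ Hk) as Hk'.
  destruct Hh as [Hh1 Hh2], Hk as [Hk1 Hk2]. split.
  - intros t Ht. apply ex_derive_mult; auto.
  - eapply ex_derive_upto_ext;
      [|apply ex_derive_upto_plus; [apply (IH _ _ Hh2 Hk')|apply (IH _ _ Hh' Hk2)]].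
    intros t Ht. simpl. rewrite Derive_mult; auto.
Qed.

Lemma smooth1_ext h k : (forall t, I t -> h t = k t) -> smooth1 I h -> smooth1 I k.
Proof.
  intros E. rewrite !smooth1_upto. intros H n. exact (ex_derive_upto_ext n h k E (H n)).
Qed.

Lemma smooth1_const c : smooth1 I (fun _ => c).
Proof. apply smooth1_upto. intro n. apply ex_derive_upto_const. Qed.

Lemma smooth1_mult h k : smooth1 I h -> smooth1 I k -> smooth1 I (fun t => h t * k t).
Proof. rewrite !smooth1_upto. intros Hh Hk n. apply ex_derive_upto_mult; auto. Qed.

Lemma smooth1_opp h : smooth1 I h -> smooth1 I (fun t => - h t).
Proof.
  intro H. eapply smooth1_ext; [|exact (smooth1_mult _ _ (smooth1_const (-1)) H)].
  intros t _. simpl. ring.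
Qed.

Lemma smooth1_ex_derive h t : smooth1 I h -> I t -> ex_derive h t.
Proof. intros H Ht. exact (H 1%nat t Ht). Qed.

Lemma smooth1_continuous h t : smooth1 I h -> I t -> continuous h t.
Proof. intros H Ht. apply continuous_of_ex_derive, (smooth1_ex_derive h t H Ht). Qed.

End Smooth1.

Lemma pd_app (ds : list bool) (d : bool) (h : R -> R -> R) :
  pd (ds ++ d :: nil) h = pd ds (pd (d :: nil) h).
Proof. induction ds as [|[|] ds IH]; simpl; try rewrite IH; reflexivity. Qed.

Section Smooth2.
Variable D : R -> R -> Prop.
Hypothesis D_open : forall u v, D u v -> locally_2d D u v.

Definition ex_partials_cont (h : R -> R -> R) : Prop :=
  forall u v, D u v ->
    ex_derive (fun s => h s v) u /\ ex_derive (fun t => h u t) v /\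
    continuity_2d_pt h u v.

Fixpoint smooth2_upto (n : nat) (h : R -> R -> R) : Prop :=
  match n with
  | O => ex_partials_cont h
  | S n => ex_partials_cont h /\
      smooth2_upto n (pd (true :: nil) h) /\ smooth2_upto n (pd (false :: nil) h)
  end.

Lemma smooth2_upto_S n h : smooth2_upto (S n) h -> smooth2_upto n h.
Proof.
  revert h; induction n as [|n IH]; intros h H; [exact (proj1 H)|].
  destruct H as [H0 [Hu Hv]]. split; [exact H0|split; apply IH; assumption].
Qed.

Lemma smooth2_upto_pd n h :
  smooth2_upto n h <-> forall ds, (length ds <= n)%nat -> ex_partials_cont (pd ds h).
Proof.
  revert h; induction n as [|n IH]; intro h; split.
  - intros H [|d ds] Hl; [exact H|simpl in Hl; lia].
  - intro H. exact (H nil (le_n _)).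
  - intros [H0 [Hu Hv]] ds Hl.
    destruct ds as [|d ds] using rev_ind; [exact H0|clear IHds].
    rewrite length_app in Hl; simpl in Hl. rewrite pd_app.
    destruct d; [apply (IH _) with (1 := Hu)|apply (IH _) with (1 := Hv)]; lia.
  - intro H. split; [exact (H nil (Nat.le_0_l _))|split; apply IH; intros ds Hl;
      rewrite <- pd_app; apply H; rewrite length_app; simpl; lia].
Qed.

Lemma smooth2_upto_iff h : smooth2 D h <-> forall n, smooth2_upto n h.
Proof.
  split.
  - intros H n. apply smooth2_upto_pd. intros ds _ u v Huv. apply H, Huv.
  - intros H ds u v Huv. exact (proj1 (smooth2_upto_pd _ h) (H _) ds (le_n _) u v Huv).
Qed.

Lemma locally_2d_of_D (P : R -> R -> Prop) u v :
  (forall u' v', D u' v' -> P u' v') -> D u v -> locally_2d P u v.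
Proof.
  intros HP Huv. apply (locally_2d_impl D); [apply locally_2d_forall; exact HP|].
  apply D_open, Huv.
Qed.

Lemma ex_partials_cont_ext h k : (forall u v, D u v -> h u v = k u v) ->
  ex_partials_cont h -> ex_partials_cont k.
Proof.
  intros E H u v Huv. destruct (H u v Huv) as [H1 [H2 H3]].
  pose proof (locally_2d_of_D _ u v E Huv) as L. split; [|split].
  - eapply ex_derive_ext_loc; [apply (locally_2d_1d_const_y _ _ _ L)|exact H1].
  - eapply ex_derive_ext_loc; [apply (locally_2d_1d_const_x _ _ _ L)|exact H2].
  - eapply continuity_2d_pt_ext_loc; [exact L|exact H3].
Qed.

Lemma smooth2_upto_ext n h k : (forall u v, D u v -> h u v = k u v) ->
  smooth2_upto n h -> smooth2_upto n k.
Proof.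
  revert h k; induction n as [|n IH]; intros h k E H; [exact (ex_partials_cont_ext h k E H)|].
  destruct H as [H0 [Hu Hv]]. split; [exact (ex_partials_cont_ext h k E H0)|split].
  - eapply IH; [|exact Hu]. intros u v Huv. simpl. apply Derive_ext_loc.
    apply (locally_2d_1d_const_y (fun u v => h u v = k u v)), (locally_2d_of_D _ u v E Huv).
  - eapply IH; [|exact Hv]. intros u v Huv. simpl. apply Derive_ext_loc.
    apply (locally_2d_1d_const_x (fun u v => h u v = k u v)), (locally_2d_of_D _ u v E Huv).
Qed.

Lemma smooth2_upto_const n (c : R) : smooth2_upto n (fun _ _ => c).
Proof.
  assert (H0 : forall c, ex_partials_cont (fun _ _ => c)).
  { intros c' u v _. split; [|split]; [apply ex_derive_const|apply ex_derive_const|].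
    apply continuity_2d_pt_const. }
  revert c; induction n as [|n IH]; intro c; [apply H0|].
  split; [apply H0|split]; (eapply smooth2_upto_ext; [|apply (IH 0)]);
    intros u v _; simpl; rewrite Derive_const; reflexivity.
Qed.

Lemma smooth2_upto_plus n h k : smooth2_upto n h -> smooth2_upto n k ->
  smooth2_upto n (fun u v => h u v + k u v).
Proof.
  assert (H0 : forall h k, ex_partials_cont h -> ex_partials_cont k ->
                 ex_partials_cont (fun u v => h u v + k u v)).
  { intros h' k' Hh Hk u v Huv. destruct (Hh u v Huv) as [A1 [A2 A3]].
    destruct (Hk u v Huv) as [C1 [C2 C3]]. split; [|split].
    - apply (ex_derive_plus (fun s => h' s v) (fun s => k' s v)); auto.
    - apply (ex_derive_plus (fun s => h' u s) (fun s => k' u s)); auto.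
    - apply continuity_2d_pt_plus; auto. }
  revert h k; induction n as [|n IH]; intros h k Hh Hk; [apply H0; auto|].
  destruct Hh as [A0 [Au Av]], Hk as [C0 [Cu Cv]].
  split; [apply H0; auto|split].
  - eapply smooth2_upto_ext; [|apply (IH _ _ Au Cu)]. intros u v Huv. simpl.
    rewrite Derive_plus; [reflexivity|apply (A0 u v Huv)|apply (C0 u v Huv)].
  - eapply smooth2_upto_ext; [|apply (IH _ _ Av Cv)]. intros u v Huv. simpl.
    rewrite Derive_plus; [reflexivity|apply (A0 u v Huv)|apply (C0 u v Huv)].
Qed.

Lemma smooth2_upto_mult n h k : smooth2_upto n h -> smooth2_upto n k ->
  smooth2_upto n (fun u v => h u v * k u v).
Proof.
  assert (H0 : forall h k, ex_partials_cont h -> ex_partials_cont k ->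
                 ex_partials_cont (fun u v => h u v * k u v)).
  { intros h' k' Hh Hk u v Huv. destruct (Hh u v Huv) as [A1 [A2 A3]].
    destruct (Hk u v Huv) as [C1 [C2 C3]]. split; [|split].
    - apply (ex_derive_mult (fun s => h' s v) (fun s => k' s v)); auto.
    - apply (ex_derive_mult (fun s => h' u s) (fun s => k' u s)); auto.
    - apply continuity_2d_pt_mult; auto. }
  revert h k; induction n as [|n IH]; intros h k Hh Hk; [apply H0; auto|].
  pose proof (smooth2_upto_S _ _ Hh) as Hh'. pose proof (smooth2_upto_S _ _ Hk) as Hk'.
  destruct Hh as [A0 [Au Av]], Hk as [C0 [Cu Cv]].
  split; [apply H0; auto|split].
  - eapply smooth2_upto_ext;
      [|apply smooth2_upto_plus; [apply (IH _ _ Au Hk')|apply (IH _ _ Hh' Cu)]].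
    intros u v Huv. simpl.
    rewrite Derive_mult; [reflexivity|apply (A0 u v Huv)|apply (C0 u v Huv)].
  - eapply smooth2_upto_ext;
      [|apply smooth2_upto_plus; [apply (IH _ _ Av Hk')|apply (IH _ _ Hh' Cv)]].
    intros u v Huv. simpl.
    rewrite Derive_mult; [reflexivity|apply (A0 u v Huv)|apply (C0 u v Huv)].
Qed.

Lemma smooth2_upto_inv n h : (forall u v, D u v -> h u v <> 0) ->
  smooth2_upto n h -> smooth2_upto n (fun u v => / h u v).
Proof.
  intro Hz.
  assert (H0 : forall h, (forall u v, D u v -> h u v <> 0) ->
                 ex_partials_cont h -> ex_partials_cont (fun u v => / h u v)).
  { intros h' Hz' Hh u v Huv. destruct (Hh u v Huv) as [A1 [A2 A3]]. split; [|split].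
    - apply (ex_derive_inv (fun s => h' s v)); auto.
    - apply (ex_derive_inv (fun s => h' u s)); auto.
    - apply continuity_2d_pt_inv; auto. }
  revert h Hz; induction n as [|n IH]; intros h Hz Hh; [apply H0; auto|].
  pose proof (IH _ Hz (smooth2_upto_S _ _ Hh)) as Hi.
  destruct Hh as [A0 [Au Av]]. split; [apply H0; auto|split].
  - eapply smooth2_upto_ext;
      [|apply smooth2_upto_mult; [apply smooth2_upto_mult with (1 := smooth2_upto_const n (-1)), Au
                                 |apply (smooth2_upto_mult _ _ _ Hi Hi)]].
    intros u v Huv. simpl. rewrite Derive_inv; [|apply (A0 u v Huv)|apply Hz, Huv].
    field. apply Hz, Huv.
  - eapply smooth2_upto_ext;
      [|apply smooth2_upto_mult; [apply smooth2_upto_mult with (1 := smooth2_upto_const n (-1)), Av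
                                 |apply (smooth2_upto_mult _ _ _ Hi Hi)]].
    intros u v Huv. simpl. rewrite Derive_inv; [|apply (A0 u v Huv)|apply Hz, Huv].
    change (Derive (h u) v) with (Derive (fun t => h u t) v). field. apply Hz, Huv.
Qed.

Lemma smooth2_upto_of_u (I : R -> Prop) n (h : R -> R) :
  (forall u v, D u v -> I u) -> ex_derive_upto I (S n) h -> smooth2_upto n (fun u _ => h u).
Proof.
  intro HI.
  assert (H0 : forall h, ex_derive_upto I 1 h -> ex_partials_cont (fun u _ => h u)).
  { intros h' [Hd _] u v Huv. split; [apply Hd, (HI u v Huv)|split; [apply ex_derive_const|]].
    apply (continuity_1d_2d_pt_comp h' (fun u _ => u)); [|apply continuity_2d_pt_id1].
    apply continuity_pt_of_continuous, continuous_of_ex_derive, Hd, (HI u v Huv). }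
  revert h; induction n as [|n IH]; intros h H; [apply H0, H|].
  split; [apply H0; split; [exact (proj1 H)|exact Logic.I]|split].
  - apply (IH (Derive h)), (proj2 H).
  - eapply smooth2_upto_ext; [|apply (smooth2_upto_const n 0)].
    intros u v _. simpl. symmetry. apply Derive_const.
Qed.

Lemma smooth2_upto_of_v (J : R -> Prop) n (h : R -> R) :
  (forall u v, D u v -> J v) -> ex_derive_upto J (S n) h -> smooth2_upto n (fun _ v => h v).
Proof.
  intro HJ.
  assert (H0 : forall h, ex_derive_upto J 1 h -> ex_partials_cont (fun _ v => h v)).
  { intros h' [Hd _] u v Huv. split; [apply ex_derive_const|split; [apply Hd, (HJ u v Huv)|]].
    apply (continuity_1d_2d_pt_comp h' (fun _ v => v)); [|apply continuity_2d_pt_id2].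
    apply continuity_pt_of_continuous, continuous_of_ex_derive, Hd, (HJ u v Huv). }
  revert h; induction n as [|n IH]; intros h H; [apply H0, H|].
  split; [apply H0; split; [exact (proj1 H)|exact Logic.I]|split].
  - eapply smooth2_upto_ext; [|apply (smooth2_upto_const n 0)].
    intros u v _. simpl. symmetry. apply Derive_const.
  - apply (IH (Derive h)), (proj2 H).
Qed.

Lemma smooth2_const (c : R) : smooth2 D (fun _ _ => c).
Proof. apply smooth2_upto_iff. intro n. apply smooth2_upto_const. Qed.

Lemma smooth2_plus h k : smooth2 D h -> smooth2 D k -> smooth2 D (fun u v => h u v + k u v).
Proof. rewrite !smooth2_upto_iff. intros Hh Hk n. apply smooth2_upto_plus; auto. Qed.

Lemma smooth2_mult h k : smooth2 D h -> smooth2 D k -> smooth2 D (fun u v => h u v * k u v).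
Proof. rewrite !smooth2_upto_iff. intros Hh Hk n. apply smooth2_upto_mult; auto. Qed.

Lemma smooth2_minus h k : smooth2 D h -> smooth2 D k -> smooth2 D (fun u v => h u v - k u v).
Proof.
  rewrite !smooth2_upto_iff. intros Hh Hk n.
  apply (smooth2_upto_ext n (fun u v => h u v + -1 * k u v)); [intros u v _; ring|].
  apply smooth2_upto_plus; [apply Hh|].
  apply (smooth2_upto_mult n (fun _ _ => -1) k); [apply smooth2_upto_const|apply Hk].
Qed.

Lemma smooth2_inv h : (forall u v, D u v -> h u v <> 0) ->
  smooth2 D h -> smooth2 D (fun u v => / h u v).
Proof. intro Hz. rewrite !smooth2_upto_iff. intros Hh n. apply smooth2_upto_inv; auto. Qed.

Lemma smooth2_of_u (I : R -> Prop) (h : R -> R) :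
  (forall u v, D u v -> I u) -> smooth1 I h -> smooth2 D (fun u _ => h u).
Proof.
  intros HI Hh. apply smooth2_upto_iff. intro n.
  apply (smooth2_upto_of_u I); [exact HI|apply smooth1_upto, Hh].
Qed.

Lemma smooth2_of_v (J : R -> Prop) (h : R -> R) :
  (forall u v, D u v -> J v) -> smooth1 J h -> smooth2 D (fun _ v => h v).
Proof.
  intros HJ Hh. apply smooth2_upto_iff. intro n.
  apply (smooth2_upto_of_v J); [exact HJ|apply smooth1_upto, Hh].
Qed.

End Smooth2.

(** * Linear systems of ODEs by Picard iteration *)

Lemma abs_RInt_le_pow_r (h : R -> R) (A : R) (m : nat) (t0 t : R) : t0 <= t ->
  ex_RInt h t0 t ->
  (forall s, t0 <= s <= t -> Rabs (h s) <= A * (s - t0) ^ m) ->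
  Rabs (RInt h t0 t) <= A * (t - t0) ^ (S m) / INR (S m).
Proof.
  intros Ht Hex Hb.
  assert (Hm : INR (S m) <> 0) by (apply not_0_INR; lia).
  assert (HP : is_RInt (fun s => A * (s - t0) ^ m) t0 t (A * (t - t0) ^ (S m) / INR (S m))).
  { replace (A * (t - t0) ^ (S m) / INR (S m)) with
      (minus (A * (t - t0) ^ (S m) / INR (S m)) (A * (t0 - t0) ^ (S m) / INR (S m)))
      by (set (k := INR (S m)) in *; unfold minus, plus, opp; simpl; field; exact Hm).
    apply (is_RInt_derive (fun s => A * (s - t0) ^ (S m) / INR (S m))).
    - intros x _. auto_derive; [exact I|].
      change (match m with 0%nat => 1 | S _ => INR m + 1 end) with (INR (S m)).
      replace (x + - t0) with (x - t0) by ring. field. exact Hm.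
    - intros x _. apply continuous_of_ex_derive. auto_derive. exact I. }
  eapply Rle_trans; [apply abs_RInt_le; auto|].
  rewrite <- (is_RInt_unique _ _ _ _ HP).
  apply RInt_le; [exact Ht|apply (ex_RInt_norm h); auto|eexists; exact HP|].
  intros x Hx. apply Hb; lra.
Qed.

Lemma abs_RInt_le_pow_l (h : R -> R) (A : R) (m : nat) (t0 t : R) : t <= t0 ->
  ex_RInt h t t0 ->
  (forall s, t <= s <= t0 -> Rabs (h s) <= A * (t0 - s) ^ m) ->
  Rabs (RInt h t t0) <= A * (t0 - t) ^ (S m) / INR (S m).
Proof.
  intros Ht Hex Hb.
  assert (Hm : INR (S m) <> 0) by (apply not_0_INR; lia).
  assert (HP : is_RInt (fun s => A * (t0 - s) ^ m) t t0 (A * (t0 - t) ^ (S m) / INR (S m))).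
  { replace (A * (t0 - t) ^ (S m) / INR (S m)) with
      (minus (- A * (t0 - t0) ^ (S m) / INR (S m)) (- A * (t0 - t) ^ (S m) / INR (S m)))
      by (set (k := INR (S m)) in *; unfold minus, plus, opp; simpl; field; exact Hm).
    apply (is_RInt_derive (fun s => - A * (t0 - s) ^ (S m) / INR (S m))).
    - intros x _. auto_derive; [exact I|].
      change (match m with 0%nat => 1 | S _ => INR m + 1 end) with (INR (S m)).
      replace (t0 + - x) with (t0 - x) by ring. field. exact Hm.
    - intros x _. apply continuous_of_ex_derive. auto_derive. exact I. }
  eapply Rle_trans; [apply abs_RInt_le; auto|].
  rewrite <- (is_RInt_unique _ _ _ _ HP).
  apply RInt_le; [exact Ht|apply (ex_RInt_norm h); auto|eexists; exact HP|].
  intros x Hx. apply Hb; lra.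
Qed.

Lemma abs_RInt_le_pow (h : R -> R) (A : R) (m : nat) (t0 t : R) :
  ex_RInt h t0 t ->
  (forall s, Rmin t0 t <= s <= Rmax t0 t -> Rabs (h s) <= A * Rabs (s - t0) ^ m) ->
  Rabs (RInt h t0 t) <= A * Rabs (t - t0) ^ (S m) / INR (S m).
Proof.
  intros Hex Hb. destruct (Rle_dec t0 t) as [Ht|Ht].
  - rewrite (Rabs_right (t - t0)) by lra. apply abs_RInt_le_pow_r; auto.
    intros s Hs. rewrite <- (Rabs_right (s - t0)) by lra. apply Hb.
    rewrite Rmin_left, Rmax_right; lra.
  - rewrite (Rabs_left (t - t0)) by lra.
    rewrite <- opp_RInt_swap, Rabs_Ropp by (apply ex_RInt_swap, Hex).
    replace (- (t - t0)) with (t0 - t) by ring.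
    apply abs_RInt_le_pow_l; [lra|apply ex_RInt_swap; auto|].
    intros s Hs. replace (t0 - s) with (- (s - t0)) by ring.
    rewrite <- (Rabs_left1 (s - t0)) by lra. apply Hb.
    rewrite Rmin_right, Rmax_left; lra.
Qed.

Lemma abs_lin_comb_le (x1 x2 k1 k2 L : R) : Rabs k1 <= L -> Rabs k2 <= L ->
  Rabs (x1 * k1 + x2 * k2) <= L * (Rabs x1 + Rabs x2).
Proof.
  intros H1 H2. eapply Rle_trans; [apply Rabs_triang|]. rewrite !Rabs_mult.
  pose proof (Rabs_pos x1). pose proof (Rabs_pos x2). nra.
Qed.

Lemma continuous_abs_bounded (I : R -> Prop) (k : R -> R) (al be : R) : al <= be ->
  (forall s, al <= s <= be -> I s) -> (forall t, I t -> continuous k t) ->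
  exists L, forall s, al <= s <= be -> Rabs (k s) <= L.
Proof.
  intros Hab Hs Hk.
  destruct (continuity_ab_maj (fun s => Rabs (k s)) al be Hab) as [m [Hm _]].
  - intros s Hs'. apply continuity_pt_of_continuous.
    apply (continuous_comp k Rabs); [apply Hk, Hs, Hs'|apply continuous_Rabs].
  - exists (Rabs (k m)). exact Hm.
Qed.

(* [x C = (lin_comb c11 c21 x, lin_comb c12 c22 x)] for a row vector [x] and
   [C = [[c11, c12], [c21, c22]]]. *)
Definition lin_comb (k1 k2 : R -> R) (x : R -> R * R) (s : R) : R :=
  fst (x s) * k1 s + snd (x s) * k2 s.

Lemma continuous_lin_comb (k1 k2 : R -> R) (x : R -> R * R) (t : R) :
  continuous (fun s => fst (x s)) t -> continuous (fun s => snd (x s)) t ->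
  continuous k1 t -> continuous k2 t -> continuous (lin_comb k1 k2 x) t.
Proof.
  intros. apply (continuous_plus (fun s => fst (x s) * k1 s) (fun s => snd (x s) * k2 s)).
  - apply (continuous_mult (fun s => fst (x s)) k1); assumption.
  - apply (continuous_mult (fun s => snd (x s)) k2); assumption.
Qed.

Section LinearODE.
Variables (a b : Rbar) (c11 c12 c21 c22 : R -> R) (t0 y1 y2 : R).
Let I := rbar_open_interval a b.
Hypothesis t0_in : I t0.
Hypothesis c11_cont : forall t, I t -> continuous c11 t.
Hypothesis c12_cont : forall t, I t -> continuous c12 t.
Hypothesis c21_cont : forall t, I t -> continuous c21 t.
Hypothesis c22_cont : forall t, I t -> continuous c22 t.

Lemma ex_RInt_from_t0 (k : R -> R) t : (forall s, I s -> continuous k s) -> I t ->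
  ex_RInt k t0 t.
Proof.
  intros Hk Ht. apply (@ex_RInt_continuous R_CompleteNormedModule).
  intros s Hs. apply Hk, (rbar_open_interval_convex a b t0 t); auto.
Qed.

Lemma is_derive_primitive (k : R -> R) (y t : R) :
  (forall s, I s -> continuous k s) -> I t ->
  is_derive (fun s => y + RInt k t0 s) t (k t).
Proof.
  intros Hk Ht. replace (k t) with (plus zero (k t)) by (unfold plus, zero; simpl; ring).
  apply (@is_derive_plus R_AbsRing R_NormedModule (fun _ => y) (fun s => RInt k t0 s)
           t zero (k t)); [apply is_derive_const|].
  apply (is_derive_RInt k (fun s => RInt k t0 s) t0 t); [|apply Hk, Ht].
  eapply filter_imp; [|apply (rbar_open_interval_locally a b t Ht)].
  intros s Hs. apply (RInt_correct k t0 s), ex_RInt_from_t0; assumption.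
Qed.

Fixpoint picard (n : nat) (t : R) : R * R :=
  match n with
  | O => (y1, y2)
  | S n => (y1 + RInt (lin_comb c11 c21 (picard n)) t0 t,
            y2 + RInt (lin_comb c12 c22 (picard n)) t0 t)
  end.

Lemma picard_continuous n t : I t ->
  continuous (fun s => fst (picard n s)) t /\ continuous (fun s => snd (picard n s)) t.
Proof.
  revert t; induction n as [|n IH]; intros t Ht; [split; apply continuous_const|].
  assert (Hk : forall k1 k2, (forall s, I s -> continuous k1 s) ->
                 (forall s, I s -> continuous k2 s) ->
                 forall s, I s -> continuous (lin_comb k1 k2 (picard n)) s).
  { intros k1 k2 H1 H2 s Hs. destruct (IH s Hs).
    apply continuous_lin_comb; auto. }
  split; apply continuous_of_ex_derive; eexists; apply is_derive_primitive; auto.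
Qed.

Lemma lin_comb_picard_continuous k1 k2 n t :
  (forall s, I s -> continuous k1 s) -> (forall s, I s -> continuous k2 s) -> I t ->
  continuous (lin_comb k1 k2 (picard n)) t.
Proof.
  intros H1 H2 Ht. destruct (picard_continuous n t Ht).
  apply continuous_lin_comb; auto.
Qed.

Lemma picard_derive n t : I t ->
  is_derive (fun s => fst (picard (S n) s)) t (lin_comb c11 c21 (picard n) t) /\
  is_derive (fun s => snd (picard (S n) s)) t (lin_comb c12 c22 (picard n) t).
Proof.
  intro Ht. split; apply is_derive_primitive; auto;
    intros s Hs; apply lin_comb_picard_continuous; auto.
Qed.

Lemma picard_t0 n : picard n t0 = (y1, y2).
Proof. destruct n; simpl; [reflexivity|]. rewrite !RInt_point. f_equal; apply Rplus_0_r. Qed.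

Definition picard_gap (m n : nat) (t : R) : R :=
  Rabs (fst (picard m t) - fst (picard n t)) + Rabs (snd (picard m t) - snd (picard n t)).

Lemma picard_gap_sym m n t : picard_gap m n t = picard_gap n m t.
Proof. unfold picard_gap. rewrite !(Rabs_minus_sym (_ (picard m t))). reflexivity. Qed.

Lemma picard_gap_triang m n p t : picard_gap m p t <= picard_gap m n t + picard_gap n p t.
Proof.
  unfold picard_gap.
  pose proof (Rabs_triang (fst (picard m t) - fst (picard n t)) (fst (picard n t) - fst (picard p t))).
  pose proof (Rabs_triang (snd (picard m t) - snd (picard n t)) (snd (picard n t) - snd (picard p t))).
  replace (fst (picard m t) - fst (picard p t)) with
    (fst (picard m t) - fst (picard n t) + (fst (picard n t) - fst (picard p t))) by ring.
  replace (snd (picard m t) - snd (picard p t)) with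
    (snd (picard m t) - snd (picard n t) + (snd (picard n t) - snd (picard p t))) by ring.
  lra.
Qed.

Lemma picard_S_sub (k1 k2 : R -> R) m n t :
  (forall s, I s -> continuous k1 s) -> (forall s, I s -> continuous k2 s) -> I t ->
  forall y, y + RInt (lin_comb k1 k2 (picard m)) t0 t - (y + RInt (lin_comb k1 k2 (picard n)) t0 t)
    = RInt (fun s => lin_comb k1 k2 (picard m) s - lin_comb k1 k2 (picard n) s) t0 t.
Proof.
  intros H1 H2 Ht y.
  rewrite (RInt_minus (lin_comb k1 k2 (picard m)) (lin_comb k1 k2 (picard n)));
    [unfold minus, plus, opp; simpl; ring| |];
    apply ex_RInt_from_t0; auto; intros; apply lin_comb_picard_continuous; auto.
Qed.

Definition picard_lim (t : R) : R * R :=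
  (real (Lim_seq (fun n => fst (picard n t))), real (Lim_seq (fun n => snd (picard n t)))).

Lemma picard_lim_t0 : picard_lim t0 = (y1, y2).
Proof.
  unfold picard_lim. rewrite !(Lim_seq_ext _ _ (fun n => f_equal _ (picard_t0 n))).
  rewrite !Lim_seq_const. reflexivity.
Qed.

Section Bounds.
Variables (al be L : R).
Hypothesis t0_mem : al <= t0 <= be.
Hypothesis segment_in : forall s, al <= s <= be -> I s.
Hypothesis coef_bound : forall s, al <= s <= be ->
  Rabs (c11 s) <= L /\ Rabs (c12 s) <= L /\ Rabs (c21 s) <= L /\ Rabs (c22 s) <= L.

Let K := Rabs y1 + Rabs y2.

Lemma L_ge0 : 0 <= L.
Proof. destruct (coef_bound t0 t0_mem) as [H _]. pose proof (Rabs_pos (c11 t0)). lra. Qed.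

Lemma lin_comb_picard_sub_le (k1 k2 : R -> R) m n s :
  Rabs (k1 s) <= L -> Rabs (k2 s) <= L ->
  Rabs (lin_comb k1 k2 (picard m) s - lin_comb k1 k2 (picard n) s) <= L * picard_gap m n s.
Proof.
  intros H1 H2. unfold lin_comb, picard_gap.
  replace (fst (picard m s) * k1 s + snd (picard m s) * k2 s -
           (fst (picard n s) * k1 s + snd (picard n s) * k2 s)) with
    ((fst (picard m s) - fst (picard n s)) * k1 s +
     (snd (picard m s) - snd (picard n s)) * k2 s) by ring.
  apply abs_lin_comb_le; assumption.
Qed.

Lemma segment_from_t0 t s : al <= t <= be -> Rmin t0 t <= s <= Rmax t0 t -> al <= s <= be.
Proof. intros Ht Hs. unfold Rmin, Rmax in Hs. destruct (Rle_dec t0 t); lra. Qed.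

Lemma picard_S_gap_le m n p A t : al <= t <= be ->
  (forall s, al <= s <= be -> picard_gap m n s <= A * Rabs (s - t0) ^ p) ->
  picard_gap (S m) (S n) t <= 2 * (L * A * Rabs (t - t0) ^ (S p) / INR (S p)).
Proof.
  intros Ht Hgap. pose proof (segment_in t Ht) as HIt.
  assert (Hint : forall k1 k2, (forall s, I s -> continuous k1 s) ->
            (forall s, I s -> continuous k2 s) ->
            (forall s, al <= s <= be -> Rabs (k1 s) <= L /\ Rabs (k2 s) <= L) ->
            Rabs (RInt (fun s => lin_comb k1 k2 (picard m) s - lin_comb k1 k2 (picard n) s) t0 t)
            <= L * A * Rabs (t - t0) ^ (S p) / INR (S p)).
  { intros k1 k2 C1 C2 Hk. apply abs_RInt_le_pow.
    - apply (ex_RInt_minus (lin_comb k1 k2 (picard m)) (lin_comb k1 k2 (picard n)));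
        apply ex_RInt_from_t0; auto; intros; apply lin_comb_picard_continuous; auto.
    - intros s Hs. pose proof (segment_from_t0 t s Ht Hs) as Hs'.
      destruct (Hk s Hs') as [K1 K2].
      eapply Rle_trans; [apply lin_comb_picard_sub_le; assumption|].
      rewrite Rmult_assoc. apply Rmult_le_compat_l; [apply L_ge0|apply Hgap, Hs']. }
  unfold picard_gap. simpl fst; simpl snd.
  rewrite !picard_S_sub by assumption.
  assert (H1 := Hint c11 c21 c11_cont c21_cont
    ltac:(intros s Hs; destruct (coef_bound s Hs) as [? [? [? ?]]]; auto)).
  assert (H2 := Hint c12 c22 c12_cont c22_cont
    ltac:(intros s Hs; destruct (coef_bound s Hs) as [? [? [? ?]]]; auto)).
  lra.
Qed.

Lemma picard_gap_1_0 t : al <= t <= be -> picard_gap 1 0 t <= 2 * L * K * Rabs (t - t0).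
Proof.
  intro Ht. pose proof (segment_in t Ht) as HIt.
  assert (Hint : forall k1 k2, (forall s, I s -> continuous k1 s) ->
            (forall s, I s -> continuous k2 s) ->
            (forall s, al <= s <= be -> Rabs (k1 s) <= L /\ Rabs (k2 s) <= L) ->
            Rabs (RInt (lin_comb k1 k2 (picard 0)) t0 t) <= L * K * Rabs (t - t0)).
  { intros k1 k2 C1 C2 Hk.
    replace (L * K * Rabs (t - t0)) with (L * K * Rabs (t - t0) ^ 1 / INR 1)
      by (simpl; field).
    apply abs_RInt_le_pow.
    - apply ex_RInt_from_t0; auto. intros; apply lin_comb_picard_continuous; auto.
    - intros s Hs. destruct (Hk s (segment_from_t0 t s Ht Hs)) as [K1 K2].
      rewrite pow_O, Rmult_1_r. apply abs_lin_comb_le; assumption. }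
  assert (H1 := Hint c11 c21 c11_cont c21_cont
    ltac:(intros s Hs; destruct (coef_bound s Hs) as [? [? [? ?]]]; auto)).
  assert (H2 := Hint c12 c22 c12_cont c22_cont
    ltac:(intros s Hs; destruct (coef_bound s Hs) as [? [? [? ?]]]; auto)).
  unfold picard_gap. simpl in H1, H2 |- *. rewrite !Rplus_minus_l. lra.
Qed.

Lemma picard_gap_step k t : al <= t <= be ->
  picard_gap (S k) k t <= K * (2 * L * Rabs (t - t0)) ^ (S k) / INR (fact (S k)).
Proof.
  revert t; induction k as [|k IH]; intros t Ht.
  - simpl. replace (K * (2 * L * Rabs (t - t0) * 1) / 1) with (2 * L * K * Rabs (t - t0))
      by field.
    apply picard_gap_1_0, Ht.
  - eapply Rle_trans.
    + apply (picard_S_gap_le _ _ (S k) (K * (2 * L) ^ (S k) / INR (fact (S k))) t Ht).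
      intros s Hs. eapply Rle_trans; [apply IH, Hs|].
      right. rewrite Rpow_mult_distr. field. apply INR_fact_neq_0.
    + right. rewrite (Rpow_mult_distr _ (Rabs (t - t0))).
      replace (fact (S (S k))) with (S (S k) * fact (S k))%nat by reflexivity.
      rewrite mult_INR. simpl pow.
      field. split; [apply INR_fact_neq_0|apply not_0_INR; lia].
Qed.

Definition picard_majorant (k : nat) : R :=
  K * (2 * L * (be - al)) ^ (S k) / INR (fact (S k)).

Lemma picard_gap_step_le_majorant k t : al <= t <= be -> picard_gap (S k) k t <= picard_majorant k.
Proof.
  intro Ht. eapply Rle_trans; [apply picard_gap_step, Ht|]. unfold picard_majorant.
  pose proof L_ge0. pose proof (Rabs_pos y1). pose proof (Rabs_pos y2).
  apply Rmult_le_compat_r; [left; apply Rinv_0_lt_compat, lt_0_INR, lt_O_fact|].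
  apply Rmult_le_compat_l; [unfold K; lra|]. apply pow_incr. split.
  - pose proof (Rabs_pos (t - t0)). nra.
  - apply Rmult_le_compat_l; [lra|]. unfold Rabs; destruct (Rcase_abs (t - t0)); lra.
Qed.

(* The majorants are the tail of the exponential series of [2 L (be - al)]. *)
Lemma ex_series_picard_majorant : ex_series picard_majorant.
Proof.
  set (x := 2 * L * (be - al)).
  assert (H : ex_series (fun k => scal (pow_n x k) (/ INR (fact k))))
    by (eexists; apply (is_exp_Reals x)).
  apply ex_series_incr_1, (ex_series_scal_l K) in H.
  eapply ex_series_ext; [|exact H]. intro k.
  unfold picard_majorant, scal; simpl. unfold mult; simpl. rewrite pow_n_pow. fold x.
  simpl. unfold Rdiv. ring.
Qed.

Lemma picard_gap_le_sum n p t : al <= t <= be ->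
  picard_gap (S (n + p)) n t <= sum_n_m picard_majorant n (n + p).
Proof.
  intro Ht. induction p as [|p IH].
  - rewrite Nat.add_0_r, sum_n_n. apply picard_gap_step_le_majorant, Ht.
  - rewrite Nat.add_succ_r, sum_n_Sm by lia.
    eapply Rle_trans; [apply (picard_gap_triang _ (S (n + p)))|].
    pose proof (picard_gap_step_le_majorant (S (n + p)) t Ht). unfold plus; simpl. lra.
Qed.

Lemma picard_cauchy (eps : posreal) : exists N, forall m n t, al <= t <= be ->
  (N <= m)%nat -> (N <= n)%nat -> picard_gap m n t < eps.
Proof.
  destruct (Cauchy_ex_series _ ex_series_picard_majorant eps) as [N HN].
  exists N.
  assert (G : forall m n t, al <= t <= be -> (N <= n)%nat -> (n <= m)%nat ->
                picard_gap m n t < eps).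
  { intros m n t Ht Hn Hnm. destruct (Nat.eq_dec n m) as [<-|E].
    - unfold picard_gap. rewrite !Rminus_eq_0, Rabs_R0, Rplus_0_l. apply cond_pos.
    - replace m with (S (n + (m - n - 1))) by lia.
      eapply Rle_lt_trans; [apply picard_gap_le_sum, Ht|].
      specialize (HN n (n + (m - n - 1))%nat Hn ltac:(lia)).
      eapply Rle_lt_trans; [apply Rle_abs|exact HN]. }
  intros m n t Ht Hm Hn. destruct (Nat.le_ge_cases n m).
  - apply G; assumption.
  - rewrite picard_gap_sym. apply G; assumption.
Qed.

Let inner := fun x => al < x < be.

Lemma CVU_picard (pr : R * R -> R) :
  (forall m n t, Rabs (pr (picard m t) - pr (picard n t)) <= picard_gap m n t) ->
  CVU_dom (fun n t => pr (picard n t)) inner.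
Proof.
  intro Hpr. apply CVU_dom_cauchy. intro eps. destruct (picard_cauchy eps) as [N HN].
  exists N. intros m n t Ht Hm Hn. eapply Rle_lt_trans; [apply Hpr|].
  apply HN; unfold inner in Ht; [lra|assumption|assumption].
Qed.

Lemma abs_fst_sub_le_picard_gap m n t :
  Rabs (fst (picard m t) - fst (picard n t)) <= picard_gap m n t.
Proof. unfold picard_gap. pose proof (Rabs_pos (snd (picard m t) - snd (picard n t))). lra. Qed.

Lemma abs_snd_sub_le_picard_gap m n t :
  Rabs (snd (picard m t) - snd (picard n t)) <= picard_gap m n t.
Proof. unfold picard_gap. pose proof (Rabs_pos (fst (picard m t) - fst (picard n t))). lra. Qed.

Lemma is_lim_seq_picard (pr : R * R -> R) t :
  (forall m n t, Rabs (pr (picard m t) - pr (picard n t)) <= picard_gap m n t) -> inner t ->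
  is_lim_seq (fun n => pr (picard n t)) (real (Lim_seq (fun n => pr (picard n t)))).
Proof. intros Hpr Ht. apply Lim_seq_correct', (CVU_CVS_dom _ _ (CVU_picard pr Hpr) t Ht). Qed.

Lemma CVU_shifted_lin_comb_picard (k1 k2 : R -> R) (gn : nat -> R -> R) :
  (forall s, al <= s <= be -> Rabs (k1 s) <= L /\ Rabs (k2 s) <= L) ->
  (forall n s, inner s -> gn (S n) s = lin_comb k1 k2 (picard n) s) ->
  CVU_dom gn inner.
Proof.
  intros Hk Hg. apply CVU_dom_cauchy. intro eps. pose proof L_ge0 as L0.
  assert (Hp : 0 < eps / (L + 1)) by (apply Rdiv_lt_0_compat; [apply cond_pos|lra]).
  destruct (picard_cauchy (mkposreal _ Hp)) as [N HN]. exists (S N).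
  intros [|m] [|n] x Hx Hm Hn; try lia. rewrite !Hg by assumption.
  assert (Hx' : al <= x <= be) by (unfold inner in Hx; lra).
  destruct (Hk x Hx') as [K1 K2].
  eapply Rle_lt_trans; [apply lin_comb_picard_sub_le; assumption|].
  specialize (HN m n x Hx' ltac:(lia) ltac:(lia)). simpl in HN.
  apply Rle_lt_trans with (L * (eps / (L + 1))).
  - apply Rmult_le_compat_l; lra.
  - pose proof (cond_pos eps).
    replace (L * (eps / (L + 1))) with (eps * (L / (L + 1))) by (field; lra).
    rewrite <- (Rmult_1_r eps) at 2. apply Rmult_lt_compat_l; [lra|].
    apply (Rmult_lt_reg_r (L + 1)); [lra|]. unfold Rdiv.
    rewrite Rmult_assoc, Rinv_l by lra. lra.
Qed.

Lemma is_derive_picard_lim (pr : R * R -> R) (k1 k2 : R -> R) t :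
  (forall m n t, Rabs (pr (picard m t) - pr (picard n t)) <= picard_gap m n t) ->
  (forall s, I s -> continuous k1 s) -> (forall s, I s -> continuous k2 s) ->
  (forall s, al <= s <= be -> Rabs (k1 s) <= L /\ Rabs (k2 s) <= L) ->
  (forall n s, I s -> is_derive (fun s => pr (picard (S n) s)) s (lin_comb k1 k2 (picard n) s)) ->
  inner t ->
  is_derive (fun s => real (Lim_seq (fun n => pr (picard n s)))) t (lin_comb k1 k2 picard_lim t).
Proof.
  intros Hpr C1 C2 Hk HD Ht.
  set (fn := fun n s => pr (picard n s)).
  assert (Hin : forall s, inner s -> I s) by (intros s Hs; apply segment_in; unfold inner in Hs; lra).
  assert (HD0 : forall s, Derive (fn 0%nat) s = 0) by (intro s; apply (Derive_const (pr (y1, y2)))).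
  assert (HDS : forall n s, I s -> Derive (fn (S n)) s = lin_comb k1 k2 (picard n) s)
    by (intros n s Hs; apply is_derive_unique, HD, Hs).
  assert (Hinner : open inner)
    by (apply (open_and (fun x => al < x) (fun x => x < be)); [apply open_gt|apply open_lt]).
  assert (Hconn : is_connected inner) by (intros x y z Hx Hy Hz; unfold inner in *; lra).
  assert (Hex : forall n s, inner s -> ex_derive (fn n) s).
  { intros [|n] s Hs; [apply (ex_derive_const (pr (y1, y2)))|eexists; apply HD, Hin, Hs]. }
  assert (Hcont : forall n s, inner s -> continuity_pt (Derive (fn n)) s).
  { intros [|n] s Hs.
    - apply (continuity_pt_ext (fun _ => 0)); [intro; symmetry; apply HD0|].
      apply continuity_pt_const. intros x y; reflexivity.
    - apply (continuity_pt_ext_loc (lin_comb k1 k2 (picard n))).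
      + eapply filter_imp; [|apply (rbar_open_interval_locally a b s (Hin s Hs))].
        intros y Hy. symmetry. apply HDS, Hy.
      + apply continuity_pt_of_continuous, lin_comb_picard_continuous; auto. }
  assert (Hcvu : CVU_dom (fun n s => Derive (fn n) s) inner)
    by (apply (CVU_shifted_lin_comb_picard k1 k2); [exact Hk|intros n s Hs; apply HDS, Hin, Hs]).
  pose proof (CVU_Derive fn inner Hinner Hconn (CVU_picard pr Hpr) Hex Hcont Hcvu t Ht) as H.
  assert (E : real (Lim_seq (fun n => Derive (fn n) t)) = lin_comb k1 k2 picard_lim t).
  { rewrite <- Lim_seq_incr_1.
    rewrite (Lim_seq_ext _ (fun n => fst (picard n t) * k1 t + snd (picard n t) * k2 t))
      by (intro n; apply HDS, Hin, Ht).
    rewrite (is_lim_seq_unique _ (fst (picard_lim t) * k1 t + snd (picard_lim t) * k2 t));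
      [reflexivity|].
    apply is_lim_seq_plus'.
    + apply (is_lim_seq_scal_r (fun n => fst (picard n t)) (k1 t) (fst (picard_lim t))).
      apply is_lim_seq_picard; [apply abs_fst_sub_le_picard_gap|exact Ht].
    + apply (is_lim_seq_scal_r (fun n => snd (picard n t)) (k2 t) (snd (picard_lim t))).
      apply is_lim_seq_picard; [apply abs_snd_sub_le_picard_gap|exact Ht]. }
  rewrite <- E. exact H.
Qed.

End Bounds.

Lemma coefficients_bounded al be : (forall s, al <= s <= be -> I s) -> al <= be ->
  exists L, forall s, al <= s <= be ->
    Rabs (c11 s) <= L /\ Rabs (c12 s) <= L /\ Rabs (c21 s) <= L /\ Rabs (c22 s) <= L.
Proof.
  intros Hseg Hab.
  destruct (continuous_abs_bounded I c11 al be Hab Hseg c11_cont) as [L1 HL1].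
  destruct (continuous_abs_bounded I c12 al be Hab Hseg c12_cont) as [L2 HL2].
  destruct (continuous_abs_bounded I c21 al be Hab Hseg c21_cont) as [L3 HL3].
  destruct (continuous_abs_bounded I c22 al be Hab Hseg c22_cont) as [L4 HL4].
  exists (Rmax (Rmax L1 L2) (Rmax L3 L4)). intros s Hs.
  pose proof (Rmax_l L1 L2). pose proof (Rmax_r L1 L2). pose proof (Rmax_l L3 L4).
  pose proof (Rmax_r L3 L4). pose proof (Rmax_l (Rmax L1 L2) (Rmax L3 L4)).
  pose proof (Rmax_r (Rmax L1 L2) (Rmax L3 L4)).
  specialize (HL1 s Hs). specialize (HL2 s Hs). specialize (HL3 s Hs). specialize (HL4 s Hs).
  repeat split; lra.
Qed.

Theorem picard_lim_solves t : I t ->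
  is_derive (fun s => fst (picard_lim s)) t (lin_comb c11 c21 picard_lim t) /\
  is_derive (fun s => snd (picard_lim s)) t (lin_comb c12 c22 picard_lim t).
Proof.
  intro Ht.
  assert (Hmin : I (Rmin t t0)) by (unfold Rmin; destruct (Rle_dec t t0); assumption).
  assert (Hmax : I (Rmax t t0)) by (unfold Rmax; destruct (Rle_dec t t0); assumption).
  destruct (rbar_open_interval_strict_bounds a b _ Hmin) as [al [_ [Hal [_ [Hal' _]]]]].
  destruct (rbar_open_interval_strict_bounds a b _ Hmax) as [_ [be [_ [Hbe [_ Hbe']]]]].
  pose proof (Rmin_l t t0). pose proof (Rmin_r t t0).
  pose proof (Rmax_l t t0). pose proof (Rmax_r t t0).
  assert (Hseg : forall s, al <= s <= be -> I s) by (apply rbar_open_interval_segment; assumption).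
  destruct (coefficients_bounded al be Hseg ltac:(lra)) as [L HL].
  assert (Ht0 : al <= t0 <= be) by lra.
  assert (Hin : al < t < be) by lra.
  split.
  - apply (is_derive_picard_lim al be L Ht0 Hseg HL fst); auto.
    + apply abs_fst_sub_le_picard_gap.
    + intros s Hs. destruct (HL s Hs) as [? [? [? ?]]]. auto.
    + intros n s Hs. apply (picard_derive n s Hs).
  - apply (is_derive_picard_lim al be L Ht0 Hseg HL snd); auto.
    + apply abs_snd_sub_le_picard_gap.
    + intros s Hs. destruct (HL s Hs) as [? [? [? ?]]]. auto.
    + intros n s Hs. apply (picard_derive n s Hs).
Qed.

End LinearODE.

(** * 2x2 matrices and SL2 frames *)

Lemma is_derive_0_const_on (a b : Rbar) (h : R -> R) (t0 t : R) :
  (forall s, rbar_open_interval a b s -> is_derive h s 0) ->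
  rbar_open_interval a b t0 -> rbar_open_interval a b t -> h t = h t0.
Proof.
  intros Hd Ht0 Ht.
  assert (Hseg : forall s, Rmin t0 t <= s <= Rmax t0 t -> rbar_open_interval a b s)
    by (intros s Hs; apply (rbar_open_interval_convex a b t0 t); assumption).
  destruct (MVT_gen h t0 t (fun _ => 0)) as [c [_ Hc]].
  - intros s Hs. apply Hd, Hseg. lra.
  - intros s Hs. apply continuity_pt_of_continuous, continuous_of_ex_derive.
    eexists. apply Hd, Hseg, Hs.
  - lra.
Qed.

Definition mid : Mat2 := mkM 1 0 0 1.

Ltac mat_simpl :=
  repeat match goal with A : Mat2 |- _ => destruct A end;
  unfold mmul, madd, mscale, minv, mdet, mtr, mid, mzero, ip, ip4, coords in *; simpl in *.

Lemma Mat2_ext (A B : Mat2) :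
  m11 A = m11 B -> m12 A = m12 B -> m21 A = m21 B -> m22 A = m22 B -> A = B.
Proof. destruct A, B; simpl; intros; subst; reflexivity. Qed.

Lemma mmul_assoc A B C : mmul (mmul A B) C = mmul A (mmul B C).
Proof. apply Mat2_ext; mat_simpl; ring. Qed.

Lemma mmul_1_l A : mmul mid A = A.
Proof. apply Mat2_ext; mat_simpl; ring. Qed.

Lemma mmul_1_r A : mmul A mid = A.
Proof. apply Mat2_ext; mat_simpl; ring. Qed.

Lemma mtr_mmul A B : mtr (mmul A B) = mmul (mtr B) (mtr A).
Proof. apply Mat2_ext; mat_simpl; ring. Qed.

Lemma mdet_mtr A : mdet (mtr A) = mdet A.
Proof. mat_simpl. ring. Qed.

Lemma mmul_minv_l A : mdet A = 1 -> mmul (minv A) A = mid.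
Proof. intro H. unfold minv. rewrite H, Rinv_1. apply Mat2_ext; mat_simpl; nra. Qed.

Lemma mmul_minv_r A : mdet A = 1 -> mmul A (minv A) = mid.
Proof. intro H. unfold minv. rewrite H, Rinv_1. apply Mat2_ext; mat_simpl; nra. Qed.

Lemma minv_sl2 A : mdet A = 1 -> minv A = mkM (m22 A) (- m12 A) (- m21 A) (m11 A).
Proof. intro H. unfold minv. rewrite H, Rinv_1. apply Mat2_ext; simpl; ring. Qed.

Lemma mdet_minv A : mdet A = 1 -> mdet (minv A) = 1.
Proof. intro H. rewrite minv_sl2 by exact H. mat_simpl. lra. Qed.

Lemma minv_minv A : mdet A = 1 -> minv (minv A) = A.
Proof.
  intro H. rewrite (minv_sl2 (minv A)) by (apply mdet_minv, H).
  rewrite minv_sl2 by exact H. apply Mat2_ext; simpl; ring.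
Qed.

Lemma minv_mmul_eq A B C : mdet A = 1 -> (mmul (minv A) B = C <-> B = mmul A C).
Proof.
  intro H. split; [intros <-|intros ->].
  - rewrite <- mmul_assoc, mmul_minv_r, mmul_1_l; auto.
  - rewrite <- mmul_assoc, mmul_minv_l, mmul_1_l; auto.
Qed.

(* The metric of E^4_2 is [<X, Y> = (tr XY - tr X tr Y) / 2]; hence SL2 x SL2 acts by isometries. *)
Lemma ip_mmul_mmul P Q X Y :
  ip (mmul P (mmul X Q)) (mmul P (mmul Y Q)) = mdet P * mdet Q * ip X Y.
Proof. mat_simpl. field. Qed.

Definition ex_mderiv (F : R -> Mat2) (x : R) : Prop :=
  ex_derive (fun t => m11 (F t)) x /\ ex_derive (fun t => m12 (F t)) x /\
  ex_derive (fun t => m21 (F t)) x /\ ex_derive (fun t => m22 (F t)) x.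

Lemma msmooth1_ex_mderiv (I : R -> Prop) F x : msmooth1 I F -> I x -> ex_mderiv F x.
Proof. intros [S1 [S2 [S3 S4]]] Hx. repeat split; eapply smooth1_ex_derive; eauto. Qed.

Lemma mderiv_ext_loc (F G : R -> Mat2) (x : R) : locally x (fun t => F t = G t) -> mderiv F x = mderiv G x.
Proof.
  intro H. apply Mat2_ext; simpl; apply Derive_ext_loc;
    (eapply filter_imp; [|exact H]); intros t Ht; simpl; rewrite Ht; reflexivity.
Qed.

Lemma Derive_lin_comb (h1 h2 : R -> R) c1 c2 x : ex_derive h1 x -> ex_derive h2 x ->
  Derive (fun s => h1 s * c1 + h2 s * c2) x = Derive h1 x * c1 + Derive h2 x * c2.
Proof.
  intros H1 H2. rewrite Derive_plus by (apply ex_derive_mult; auto; apply ex_derive_const).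
  rewrite !Derive_mult by (auto; apply ex_derive_const). rewrite !Derive_const. ring.
Qed.

Lemma Derive_lin_comb_l (h1 h2 : R -> R) c1 c2 x : ex_derive h1 x -> ex_derive h2 x ->
  Derive (fun s => c1 * h1 s + c2 * h2 s) x = c1 * Derive h1 x + c2 * Derive h2 x.
Proof.
  intros H1 H2. rewrite (Derive_ext _ (fun s => h1 s * c1 + h2 s * c2)) by (intro; ring).
  rewrite Derive_lin_comb by assumption. ring.
Qed.

Lemma mderiv_mmul_const_r F A x : ex_mderiv F x ->
  mderiv (fun s => mmul (F s) A) x = mmul (mderiv F x) A.
Proof. intros [H1 [H2 [H3 H4]]]. apply Mat2_ext; simpl; apply Derive_lin_comb; auto. Qed.

Lemma mderiv_mmul_const_l A G x : ex_mderiv G x ->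
  mderiv (fun s => mmul A (G s)) x = mmul A (mderiv G x).
Proof.
  intros [H1 [H2 [H3 H4]]]. apply Mat2_ext; simpl; apply Derive_lin_comb_l; auto.
Qed.

Section SL2Frame.
Variables (a b : Rbar) (C : R -> Mat2).
Let I := rbar_open_interval a b.
Let I_open : forall x, I x -> locally x I := rbar_open_interval_locally a b.
Hypothesis C_smooth : msmooth1 I C.
Hypothesis C_traceless : forall t, I t -> m11 (C t) + m22 (C t) = 0.

Let c11 t := m11 (C t).
Let c12 t := m12 (C t).
Let c21 t := m21 (C t).
Let c22 t := m22 (C t).

Definition row_ode (x : R -> R * R) : Prop := forall t, I t ->
  is_derive (fun s => fst (x s)) t (lin_comb c11 c21 x t) /\
  is_derive (fun s => snd (x s)) t (lin_comb c12 c22 x t).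

Lemma row_ode_smooth x : row_ode x ->
  smooth1 I (fun s => fst (x s)) /\ smooth1 I (fun s => snd (x s)).
Proof.
  intro Hx. destruct C_smooth as [S11 [S12 [S21 S22]]].
  assert (G : forall n, ex_derive_upto I n (fun s => fst (x s)) /\
                        ex_derive_upto I n (fun s => snd (x s))).
  { induction n as [|n [IH1 IH2]]; [split; exact Logic.I|].
    assert (Hrhs : forall k1 k2, smooth1 I k1 -> smooth1 I k2 ->
              ex_derive_upto I n (lin_comb k1 k2 x)).
    { intros k1 k2 K1 K2.
      apply (ex_derive_upto_plus I I_open); apply (ex_derive_upto_mult I I_open); auto;
        apply smooth1_upto; assumption. }
    split; split.
    - intros t Ht. eexists. apply (Hx t Ht).
    - eapply (ex_derive_upto_ext I I_open); [|apply (Hrhs c11 c21); assumption].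
      intros t Ht. symmetry. apply is_derive_unique, (Hx t Ht).
    - intros t Ht. eexists. apply (Hx t Ht).
    - eapply (ex_derive_upto_ext I I_open); [|apply (Hrhs c12 c22); assumption].
      intros t Ht. symmetry. apply is_derive_unique, (Hx t Ht). }
  split; apply smooth1_upto; intro n; apply G.
Qed.

(* Liouville: the Wronskian of two solutions of [x' = x C] satisfies [W' = tr C W = 0]. *)
Lemma row_ode_wronskian_const x w t0 t : row_ode x -> row_ode w -> I t0 -> I t ->
  fst (x t) * snd (w t) - snd (x t) * fst (w t) =
  fst (x t0) * snd (w t0) - snd (x t0) * fst (w t0).
Proof.
  intros Hx Hw Ht0 Ht.
  apply (is_derive_0_const_on a b (fun s => fst (x s) * snd (w s) - snd (x s) * fst (w s)));
    [|assumption|assumption].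
  intros s Hs. destruct (Hx s Hs) as [X1 X2]. destruct (Hw s Hs) as [W1 W2].
  replace 0 with (lin_comb c11 c21 x s * snd (w s) + fst (x s) * lin_comb c12 c22 w s -
                  (lin_comb c12 c22 x s * fst (w s) + snd (x s) * lin_comb c11 c21 w s)).
  - apply (is_derive_minus (fun s => fst (x s) * snd (w s)) (fun s => snd (x s) * fst (w s)));
      apply (is_derive_mult (fun s => _ (x s)) (fun s => _ (w s))); auto;
      intros; apply Rmult_comm.
  - pose proof (C_traceless s Hs). unfold lin_comb, c11, c12, c21, c22.
    transitivity ((m11 (C s) + m22 (C s)) *
                  (fst (x s) * snd (w s) - snd (x s) * fst (w s))); [ring|].
    rewrite H. ring.
Qed.

Theorem sl2_frame_exists : exists F : R -> Mat2, msmooth1 I F /\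
  forall t, I t -> inSL2 (F t) /\ mmul (minv (F t)) (mderiv F t) = C t.
Proof.
  destruct (classic (exists t0, I t0)) as [[t0 Ht0]|Hempty].
  2:{ exists (fun _ => mid). split.
      - repeat split; intros n t Ht; exfalso; apply Hempty; eauto.
      - intros t Ht; exfalso; apply Hempty; eauto. }
  assert (Hc : forall k : R -> R, smooth1 I k -> forall t, I t -> continuous k t)
    by (intros k Hk t Ht; apply (smooth1_continuous I); assumption).
  destruct C_smooth as [S11 [S12 [S21 S22]]].
  set (x := picard_lim c11 c12 c21 c22 t0 1 0).
  set (w := picard_lim c11 c12 c21 c22 t0 0 1).
  assert (Hx : row_ode x) by (intros t Ht; apply (picard_lim_solves a b); auto).
  assert (Hw : row_ode w) by (intros t Ht; apply (picard_lim_solves a b); auto).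
  destruct (row_ode_smooth x Hx) as [X1 X2]. destruct (row_ode_smooth w Hw) as [W1 W2].
  exists (fun t => mkM (fst (x t)) (snd (x t)) (fst (w t)) (snd (w t))).
  split; [repeat split; assumption|]. intros t Ht.
  assert (Hdet : inSL2 (mkM (fst (x t)) (snd (x t)) (fst (w t)) (snd (w t)))).
  { unfold inSL2, mdet; cbn [m11 m12 m21 m22]. rewrite (row_ode_wronskian_const x w t0 t Hx Hw Ht0 Ht).
    unfold x, w. rewrite !picard_lim_t0. simpl. ring. }
  split; [exact Hdet|]. apply (minv_mmul_eq _ _ _ Hdet).
  destruct (Hx t Ht) as [D1 D2]. destruct (Hw t Ht) as [D3 D4].
  apply Mat2_ext; cbn [mmul mderiv m11 m12 m21 m22]; apply is_derive_unique;
    [exact D1|exact D2|exact D3|exact D4].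
Qed.

End SL2Frame.

(** * The surface [F1 G] *)

Lemma ip_sym X Y : ip X Y = ip Y X.
Proof. mat_simpl. ring. Qed.

Lemma ip_madd_mscale_l a b X Y Z :
  ip (madd (mscale a X) (mscale b Y)) Z = a * ip X Z + b * ip Y Z.
Proof. mat_simpl. field. Qed.

Lemma ip_mzero_l Z : ip mzero Z = 0.
Proof. mat_simpl. field. Qed.

Lemma lin_indep2_null_pair X Y :
  ip X X = 0 -> ip Y Y = 0 -> ip X Y <> 0 -> lin_indep2 X Y.
Proof.
  intros HX HY HXY a b E.
  pose proof (f_equal (fun Z => ip Z X) E) as EX. pose proof (f_equal (fun Z => ip Z Y) E) as EY.
  simpl in EX, EY. rewrite ip_madd_mscale_l, ip_mzero_l in EX, EY.
  rewrite HX, (ip_sym Y X) in EX. rewrite HY in EY.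
  assert (Ea : a * ip X Y = 0) by lra. assert (Eb : b * ip X Y = 0) by lra.
  split; [destruct (Rmult_integral _ _ Ea)|destruct (Rmult_integral _ _ Eb)]; tauto.
Qed.

Lemma mmul_mscale A B c d : mmul (mscale c A) (mscale d B) = mscale (c * d) (mmul A B).
Proof. apply Mat2_ext; mat_simpl; ring. Qed.

Lemma ip_mscale_l c X Y : ip (mscale c X) Y = c * ip X Y.
Proof. mat_simpl. field. Qed.

Lemma ip_mscale_r c X Y : ip X (mscale c Y) = c * ip X Y.
Proof. mat_simpl. field. Qed.

Lemma ip_mid_mid : ip mid mid = -1.
Proof. mat_simpl. field. Qed.

Lemma ip_Aq_Aq q : ip (Aq q) (Aq q) = 0.
Proof. unfold Aq. mat_simpl. field. Qed.

Lemma ip_Br_Br r : ip (Br r) (Br r) = 0.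
Proof. unfold Br. mat_simpl. field. Qed.

Lemma ip_Aq_Br q r : ip (Aq q) (Br r) = (1 + q * r) ^ 2 / 2.
Proof. unfold Aq, Br. mat_simpl. field. Qed.

(* The unit normal of the surface at the identity frame. *)
Definition normal_model (q r : R) : Mat2 :=
  mscale (/ (1 + q * r)) (mkM (q * r - 1) (2 * q) (2 * r) (1 - q * r)).

Lemma ip_normal_model_self q r : 1 + q * r <> 0 ->
  ip (normal_model q r) (normal_model q r) = 1.
Proof. intro H. unfold normal_model. mat_simpl. field. exact H. Qed.

Lemma ip_normal_model_mid q r : 1 + q * r <> 0 -> ip (normal_model q r) mid = 0.
Proof. intro H. unfold normal_model. mat_simpl. field. exact H. Qed.

Lemma ip_normal_model_Aq q r : 1 + q * r <> 0 -> ip (normal_model q r) (Aq q) = 0.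
Proof. intro H. unfold normal_model, Aq. mat_simpl. field. exact H. Qed.

Lemma ip_normal_model_Br q r : 1 + q * r <> 0 -> ip (normal_model q r) (Br r) = 0.
Proof. intro H. unfold normal_model, Br. mat_simpl. field. exact H. Qed.

Lemma ip_AqBr_normal_model q r : 1 + q * r <> 0 ->
  ip (mmul (Aq q) (Br r)) (normal_model q r) = (1 + q * r) ^ 2 / 2.
Proof. intro H. unfold normal_model, Aq, Br. mat_simpl. field. exact H. Qed.

Section MatrixSmooth2.
Variable D : R -> R -> Prop.
Hypothesis D_open : forall u v, D u v -> locally_2d D u v.

Lemma msmooth2_mmul A B : msmooth2 D A -> msmooth2 D B -> msmooth2 D (fun u v => mmul (A u v) (B u v)).
Proof.
  intros [A11 [A12 [A21 A22]]] [B11 [B12 [B21 B22]]].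
  refine (conj _ (conj _ (conj _ _))); cbn [mmul m11 m12 m21 m22];
    apply (smooth2_plus D D_open); apply (smooth2_mult D D_open); assumption.
Qed.

Lemma msmooth2_of_u (I : R -> Prop) F : (forall u v, D u v -> I u) -> msmooth1 I F ->
  msmooth2 D (fun u _ => F u).
Proof.
  intros HI [F11 [F12 [F21 F22]]].
  refine (conj _ (conj _ (conj _ _))); apply (smooth2_of_u D D_open I (fun u => _ (F u))); assumption.
Qed.

Lemma msmooth2_of_v (J : R -> Prop) G : (forall u v, D u v -> J v) -> msmooth1 J G ->
  msmooth2 D (fun _ v => G v).
Proof.
  intros HJ [G11 [G12 [G21 G22]]].
  refine (conj _ (conj _ (conj _ _))); apply (smooth2_of_v D D_open J (fun v => _ (G v))); assumption.
Qed.

Lemma msmooth2_normal_model (I J : R -> Prop) (q r : R -> R) :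
  (forall u v, D u v -> I u) -> (forall u v, D u v -> J v) ->
  smooth1 I q -> smooth1 J r -> (forall u v, D u v -> 1 + q u * r v <> 0) ->
  msmooth2 D (fun u v => normal_model (q u) (r v)).
Proof.
  intros HI HJ Hq Hr Hqr.
  assert (Sq : smooth2 D (fun u _ => q u)) by (apply (smooth2_of_u D D_open I); assumption).
  assert (Sr : smooth2 D (fun _ v => r v)) by (apply (smooth2_of_v D D_open J); assumption).
  assert (Sc : forall c, smooth2 D (fun _ _ => c)) by (apply smooth2_const, D_open).
  assert (Sqr : smooth2 D (fun u v => q u * r v)) by (apply (smooth2_mult D D_open); assumption).
  assert (Sinv : smooth2 D (fun u v => / (1 + q u * r v)))
    by (apply (smooth2_inv D D_open); [exact Hqr|apply (smooth2_plus D D_open); auto]).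
  refine (conj _ (conj _ (conj _ _))); cbn [normal_model mscale m11 m12 m21 m22];
    apply (smooth2_mult D D_open); try exact Sinv.
  - apply (smooth2_minus D D_open); [exact Sqr|apply Sc].
  - apply (smooth2_mult D D_open); [apply Sc|exact Sq].
  - apply (smooth2_mult D D_open); [apply Sc|exact Sr].
  - apply (smooth2_minus D D_open); [apply Sc|exact Sqr].
Qed.

End MatrixSmooth2.

Lemma rbar_open_rectangle_locally_2d (a b c d : Rbar) u v :
  rbar_open_interval a b u /\ rbar_open_interval c d v ->
  locally_2d (fun u v => rbar_open_interval a b u /\ rbar_open_interval c d v) u v.
Proof.
  intros [Hu Hv]. destruct (rbar_open_interval_ball a b u Hu) as [e1 He1].
  destruct (rbar_open_interval_ball c d v Hv) as [e2 He2].
  exists (mkposreal _ (Rmin_pos _ _ (cond_pos e1) (cond_pos e2))); simpl.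
  intros u' v' H1 H2. split.
  - apply He1. eapply Rlt_le_trans; [exact H1|apply Rmin_l].
  - apply He2. eapply Rlt_le_trans; [exact H2|apply Rmin_r].
Qed.

Lemma d_u_mmul F G u v : ex_mderiv F u ->
  d_u (fun u v => mmul (F u) (G v)) u v = mmul (mderiv F u) (G v).
Proof. apply mderiv_mmul_const_r. Qed.

Lemma d_v_mmul F G u v : ex_mderiv G v ->
  d_v (fun u v => mmul (F u) (G v)) u v = mmul (F u) (mderiv G v).
Proof. apply mderiv_mmul_const_l. Qed.

Lemma d_v_d_u_mmul F G u v : ex_mderiv F u -> ex_mderiv G v ->
  d_v (d_u (fun u v => mmul (F u) (G v))) u v = mmul (mderiv F u) (mderiv G v).
Proof.
  intros HF HG. unfold d_v at 1.
  rewrite (mderiv_ext_loc _ (fun t => mmul (mderiv F u) (G t)))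
    by (apply filter_forall; intro t; apply d_u_mmul, HF).
  apply mderiv_mmul_const_l, HG.
Qed.

Lemma nondegenerate_split f g q r : f * g * (1 + q * r) ^ 2 <> 0 ->
  f <> 0 /\ g <> 0 /\ 1 + q * r <> 0.
Proof. intro H. repeat split; intro E; apply H; rewrite E; ring. Qed.

Section FrameSurface.
Variables (a b c d : Rbar) (q f r g : R -> R) (F G : R -> Mat2).
Let I := rbar_open_interval a b.
Let J := rbar_open_interval c d.
Let M := fun u v => I u /\ J v.
Hypothesis q_smooth : smooth1 I q.
Hypothesis r_smooth : smooth1 J r.
Hypothesis nondegenerate : forall u v, M u v -> f u * g v * (1 + q u * r v) ^ 2 <> 0.
Hypothesis F_smooth : msmooth1 I F.
Hypothesis F_frame : forall u, I u ->
  inSL2 (F u) /\ mderiv F u = mmul (F u) (mscale (f u) (Aq (q u))).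
Hypothesis G_smooth : msmooth1 J G.
Hypothesis G_frame : forall v, J v ->
  inSL2 (G v) /\ mderiv G v = mmul (mscale (g v) (Br (r v))) (G v).

Let phi := fun u v => mmul (F u) (G v).

(* [Z] transported by the frame at [(u, v)]; tangent and normal vectors of [phi] all have this form. *)
Let frame (Z : Mat2) u v := mmul (F u) (mmul Z (G v)).

Let M_open : forall u v, M u v -> locally_2d M u v := rbar_open_rectangle_locally_2d a b c d.

Lemma ip_frame Z W u v : M u v -> ip (frame Z u v) (frame W u v) = ip Z W.
Proof.
  intros [Hu Hv]. unfold frame. rewrite ip_mmul_mmul.
  rewrite (proj1 (F_frame u Hu)), (proj1 (G_frame v Hv)). ring.
Qed.

Lemma frame_surface_eqs u v : M u v ->
  phi u v = frame mid u v /\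
  d_u phi u v = frame (mscale (f u) (Aq (q u))) u v /\
  d_v phi u v = frame (mscale (g v) (Br (r v))) u v /\
  d_v (d_u phi) u v = frame (mmul (mscale (f u) (Aq (q u))) (mscale (g v) (Br (r v)))) u v.
Proof.
  intros [Hu Hv]. unfold phi, frame.
  pose proof (msmooth1_ex_mderiv I F u F_smooth Hu) as EF.
  pose proof (msmooth1_ex_mderiv J G v G_smooth Hv) as EG.
  destruct (F_frame u Hu) as [_ DF]. destruct (G_frame v Hv) as [_ DG].
  rewrite d_u_mmul, d_v_mmul, d_v_d_u_mmul, DF, DG by assumption.
  rewrite mmul_1_l, !mmul_assoc. repeat split.
Qed.

Lemma frame_surface_metric_coef u v : M u v ->
  metric_coef phi u v = (1 + q u * r v) ^ 2 * f u * g v.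
Proof.
  intro Huv. destruct (frame_surface_eqs u v Huv) as [_ [Du [Dv _]]].
  unfold metric_coef. rewrite Du, Dv, ip_frame, ip_mscale_l, ip_mscale_r, ip_Aq_Br by exact Huv. field.
Qed.

Lemma frame_surface_smooth : msmooth2 M phi.
Proof.
  apply (msmooth2_mmul M M_open (fun u _ => F u) (fun _ v => G v)).
  - apply (msmooth2_of_u M M_open I); [intros u v []; auto|exact F_smooth].
  - apply (msmooth2_of_v M M_open J); [intros u v []; auto|exact G_smooth].
Qed.

Theorem frame_surface_immersion : conformal_timelike_immersion M phi.
Proof.
  split; [exact frame_surface_smooth|]. intros u v Huv.
  destruct (nondegenerate_split _ _ _ _ (nondegenerate u v Huv)) as [Hf [Hg Hqr]].
  destruct (frame_surface_eqs u v Huv) as [P [Du [Dv _]]].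
  assert (Nu : ip (d_u phi u v) (d_u phi u v) = 0)
    by (rewrite Du, ip_frame, ip_mscale_l, ip_mscale_r, ip_Aq_Aq by exact Huv; ring).
  assert (Nv : ip (d_v phi u v) (d_v phi u v) = 0)
    by (rewrite Dv, ip_frame, ip_mscale_l, ip_mscale_r, ip_Br_Br by exact Huv; ring).
  assert (Cuv : ip (d_u phi u v) (d_v phi u v) <> 0).
  { pose proof (frame_surface_metric_coef u v Huv) as E. unfold metric_coef in E.
    intro Z. rewrite Z in E. apply (nondegenerate u v Huv). lra. }
  split; [unfold inH31; rewrite P, ip_frame, ip_mid_mid by exact Huv; reflexivity|].
  split; [apply lin_indep2_null_pair; assumption|].
  repeat split; assumption.
Qed.

Theorem frame_surface_cmc : cmc_pm1 M phi.
Proof.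
  exists (fun u v => frame (normal_model (q u) (r v)) u v). split; [split|left].
  - apply (msmooth2_mmul M M_open (fun u _ => F u)).
    + apply (msmooth2_of_u M M_open I); [intros u v []; auto|exact F_smooth].
    + apply (msmooth2_mmul M M_open _ (fun _ v => G v)).
      * apply (msmooth2_normal_model M M_open I J); try assumption;
          [intros u v []; auto|intros u v []; auto|].
        intros u v Huv. apply (nondegenerate_split _ _ _ _ (nondegenerate u v Huv)).
      * apply (msmooth2_of_v M M_open J); [intros u v []; auto|exact G_smooth].
  - intros u v Huv.
    destruct (nondegenerate_split _ _ _ _ (nondegenerate u v Huv)) as [_ [_ Hqr]].
    destruct (frame_surface_eqs u v Huv) as [P [Du [Dv _]]].
    rewrite P, Du, Dv, !ip_frame, !ip_mscale_r by exact Huv.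
    rewrite ip_normal_model_self, ip_normal_model_mid, ip_normal_model_Aq, ip_normal_model_Br
      by exact Hqr.
    repeat split; ring.
  - intros u v Huv.
    destruct (nondegenerate_split _ _ _ _ (nondegenerate u v Huv)) as [Hf [Hg Hqr]].
    destruct (frame_surface_eqs u v Huv) as [_ [_ [_ Duv]]].
    unfold mean_curv. rewrite frame_surface_metric_coef, Duv, ip_frame, mmul_mscale, ip_mscale_l,
      ip_AqBr_normal_model by assumption.
    field. repeat split; assumption.
Qed.

Theorem frame_surface_metric : metric_conformal_to M phi (fun u v => (1 + q u * r v) ^ 2 * f u * g v).
Proof.
  exists (fun _ _ => 1). split; [apply (smooth2_const M M_open)|].
  intros u v Huv. split; [lra|]. rewrite frame_surface_metric_coef by exact Huv. ring.
Qed.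

Theorem frame_surface_properties :
  conformal_timelike_immersion M phi /\ cmc_pm1 M phi /\
  metric_conformal_to M phi (fun u v => (1 + q u * r v) ^ 2 * f u * g v).
Proof. split; [|split]; [apply frame_surface_immersion|apply frame_surface_cmc|apply frame_surface_metric]. Qed.

End FrameSurface.

Lemma msmooth1_mtr (I : R -> Prop) F : msmooth1 I F -> msmooth1 I (fun t => mtr (F t)).
Proof. intros [S11 [S12 [S21 S22]]]. repeat split; assumption. Qed.

Lemma msmooth1_minv_sl2 (I : R -> Prop) F : (forall x, I x -> locally x I) ->
  msmooth1 I F -> (forall t, I t -> inSL2 (F t)) -> msmooth1 I (fun t => minv (F t)).
Proof.
  intros I_open [S11 [S12 [S21 S22]]] Hdet.
  assert (E : forall t, I t -> minv (F t) = mkM (m22 (F t)) (- m12 (F t)) (- m21 (F t)) (m11 (F t)))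
    by (intros t Ht; apply minv_sl2, Hdet, Ht).
  refine (conj _ (conj _ (conj _ _)));
    (eapply (smooth1_ext I I_open); [intros t Ht; rewrite (E t Ht); reflexivity|]);
    cbn [m11 m12 m21 m22].
  - exact S22.
  - apply (smooth1_opp I I_open), S12.
  - apply (smooth1_opp I I_open), S21.
  - exact S11.
Qed.

Lemma mtr_mscale_Aq c r : mtr (mscale c (Aq r)) = mscale c (Br r).
Proof. apply Mat2_ext; simpl; ring. Qed.

Lemma Aq_frame_exists (a b : Rbar) (f q : R -> R) :
  smooth1 (rbar_open_interval a b) f -> smooth1 (rbar_open_interval a b) q ->
  exists F : R -> Mat2, msmooth1 (rbar_open_interval a b) F /\
    forall u, rbar_open_interval a b u ->
      inSL2 (F u) /\ mmul (minv (F u)) (mderiv F u) = mscale (f u) (Aq (q u)).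
Proof.
  intros Hf Hq. pose proof (rbar_open_interval_locally a b) as I_open.
  apply (sl2_frame_exists a b (fun u => mscale (f u) (Aq (q u)))).
  - refine (conj _ (conj _ (conj _ _))); simpl; apply (smooth1_mult _ I_open); auto.
    + apply (smooth1_opp _ I_open), (smooth1_mult _ I_open); auto.
      apply (smooth1_mult _ I_open); auto. apply (smooth1_const _ I_open).
    + apply (smooth1_const _ I_open).
    + apply (smooth1_opp _ I_open), Hq.
  - intros t _. simpl. ring.
Qed.

Lemma transposed_frame (F : R -> Mat2) (g r : R) v :
  inSL2 (F v) -> mmul (minv (F v)) (mderiv F v) = mscale g (Aq r) ->
  inSL2 (mtr (F v)) /\
  mderiv (fun t => mtr (F t)) v = mmul (mscale g (Br r)) (mtr (F v)).
Proof.
  intros Hdet Hd. split; [unfold inSL2; rewrite mdet_mtr; exact Hdet|].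
  apply minv_mmul_eq in Hd; [|exact Hdet].
  change (mderiv (fun t => mtr (F t)) v) with (mtr (mderiv F v)).
  rewrite Hd, mtr_mmul, mtr_mscale_Aq. reflexivity.
Qed.

Lemma inverse_frame (F : R -> Mat2) (Y : Mat2) v :
  inSL2 (F v) -> mmul (mderiv (fun t => minv (F t)) v) (F v) = Y ->
  inSL2 (minv (F v)) /\ mderiv (fun t => minv (F t)) v = mmul Y (minv (F v)).
Proof.
  intros Hdet Hd. split; [apply mdet_minv, Hdet|].
  rewrite <- Hd, mmul_assoc, mmul_minv_r, mmul_1_r by exact Hdet. reflexivity.
Qed.

Lemma Br_coframe_exists (c d : Rbar) (g r : R -> R) :
  smooth1 (rbar_open_interval c d) g -> smooth1 (rbar_open_interval c d) r ->
  exists F : R -> Mat2, msmooth1 (rbar_open_interval c d) F /\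
    forall v, rbar_open_interval c d v -> inSL2 (F v) /\
      mmul (mderiv (fun t => minv (F t)) v) (F v) = mscale (g v) (Br (r v)).
Proof.
  intros Hg Hr. pose proof (rbar_open_interval_locally c d) as J_open.
  destruct (Aq_frame_exists c d g r Hg Hr) as [H [HS HH]].
  assert (HT : forall v, rbar_open_interval c d v -> inSL2 (mtr (H v)) /\
      mderiv (fun t => mtr (H t)) v = mmul (mscale (g v) (Br (r v))) (mtr (H v)))
    by (intros v Hv; destruct (HH v Hv); apply transposed_frame; assumption).
  exists (fun t => minv (mtr (H t))). split.
  - apply (msmooth1_minv_sl2 _ _ J_open); [apply msmooth1_mtr, HS|intros t Ht; apply HT, Ht].
  - intros v Hv. destruct (HT v Hv) as [Hdet HD].
    split; [apply mdet_minv, Hdet|].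
    rewrite (mderiv_ext_loc _ (fun t => mtr (H t))).
    + rewrite HD, mmul_assoc, mmul_minv_r, mmul_1_r by exact Hdet. reflexivity.
    + eapply filter_imp; [|apply (J_open v Hv)].
      intros t Ht. apply minv_minv, HT, Ht.
Qed.

Theorem mainTheorem8 (a b c d : Rbar) (q f r g : R -> R) :
  let I := rbar_open_interval a b in
  let J := rbar_open_interval c d in
  let M := fun u v => I u /\ J v in
  smooth1 I q -> smooth1 I f -> smooth1 J r -> smooth1 J g ->
  (forall u v, M u v -> f u * g v * (1 + q u * r v) ^ 2 <> 0) ->
  let lam := fun u v => (1 + q u * r v) ^ 2 * f u * g v in
  let sol1 := fun F1 : R -> Mat2 =>
    msmooth1 I F1 /\
    forall u, I u -> inSL2 (F1 u) /\
      mmul (minv (F1 u)) (mderiv F1 u) = mscale (f u) (Aq (q u)) in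
  (* (i) *)
  ((exists F1 F2 : R -> Mat2, sol1 F1 /\ msmooth1 J F2 /\
      forall v, J v -> inSL2 (F2 v) /\
        mmul (minv (F2 v)) (mderiv F2 v) = mscale (g v) (Aq (r v))) /\
   (forall F1 F2 : R -> Mat2, sol1 F1 -> msmooth1 J F2 ->
      (forall v, J v -> inSL2 (F2 v) /\
        mmul (minv (F2 v)) (mderiv F2 v) = mscale (g v) (Aq (r v))) ->
      let phi := fun u v => mmul (F1 u) (mtr (F2 v)) in
      conformal_timelike_immersion M phi /\ cmc_pm1 M phi /\
      metric_conformal_to M phi lam)) /\
  (* (ii) *)
  ((exists F1 F2 : R -> Mat2, sol1 F1 /\ msmooth1 J F2 /\
      forall v, J v -> inSL2 (F2 v) /\
        mmul (mderiv (fun t => minv (F2 t)) v) (F2 v) = mscale (g v) (Br (r v))) /\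
   (forall F1 F2 : R -> Mat2, sol1 F1 -> msmooth1 J F2 ->
      (forall v, J v -> inSL2 (F2 v) /\
        mmul (mderiv (fun t => minv (F2 t)) v) (F2 v) = mscale (g v) (Br (r v))) ->
      let psi := fun u v => mmul (F1 u) (minv (F2 v)) in
      conformal_timelike_immersion M psi /\ cmc_pm1 M psi /\
      metric_conformal_to M psi lam)).
Proof.
  intros I J M Hq Hf Hr Hg Hnz lam sol1.
  assert (Hframe : forall F1, sol1 F1 -> forall u, I u ->
            inSL2 (F1 u) /\ mderiv F1 u = mmul (F1 u) (mscale (f u) (Aq (q u)))).
  { intros F1 [_ H1] u Hu. destruct (H1 u Hu) as [Hdet Hd].
    split; [exact Hdet|apply minv_mmul_eq; assumption]. }
  destruct (Aq_frame_exists a b f q Hf Hq) as [F1 HF1].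
  split; split.
  - destruct (Aq_frame_exists c d g r Hg Hr) as [F2 HF2]. exists F1, F2. split; assumption.
  - intros F1' F2 HF1' S2 H2.
    apply (frame_surface_properties a b c d q f r g F1' (fun v => mtr (F2 v))); auto.
    + apply HF1'.
    + apply msmooth1_mtr, S2.
    + intros v Hv. destruct (H2 v Hv). apply transposed_frame; assumption.
  - destruct (Br_coframe_exists c d g r Hg Hr) as [F2 HF2]. exists F1, F2. split; assumption.
  - intros F1' F2 HF1' S2 H2.
    apply (frame_surface_properties a b c d q f r g F1' (fun v => minv (F2 v))); auto.
    + apply HF1'.
    + apply (msmooth1_minv_sl2 _ _ (rbar_open_interval_locally c d) S2). apply H2.
    + intros v Hv. destruct (H2 v Hv). apply inverse_frame; assumption.
Qed.
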